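(* Assume (affine MRDP) that for every affine $\Sigma_0$-formula $\phi(\bar x)$ there is an affine quantifier-free formula $\psi(\bar x,\bar y)$ such that every model of $\mathrm{AA}$ satisfies $\phi(\bar x)=\sup_{\bar y}\psi(\bar x,\bar y)$. Let $M\subseteq N$ be models of $\mathrm{AA}_0$ with $N$ a cofinal extension of $M$, and assume $M\models\mathrm{AA}$. Then the following are equivalent: (i) $M\preccurlyeq_{\Sigma_0}N$; (ii) $N\models\mathrm{AA}$; (iii) $M\preccurlyeq N$.
   Context: Structures are complete metric spaces of diameter at most $1$ in $L=\{+,\cdot,\wedge,\vee,0,1\}$ (operations $1$-Lipschitz, $d$ the only relation symbol); affine formulas are built from $1$ and $d(t_1,t_2)$ using $+$, real scalar multiples, $\sup$, $\inf$; quantifier-free affine formulas use only $1$, atomic formulas, $+$ and scalar multiples. $\mathrm{AA}$ is the set of all closed affine conditions true in every model of first-order Peano arithmetic (in $L$, with $\le$ given by $x\wedge y=x$, lattice operations min/max, discrete metric). $|x|=d(x,0)$; $x\le y$ means $x\wedge y=x$; $nx$, $x^n$ iterated sum/product. $\mathrm{AA}_0$ consists of (universally quantified): (A1) the identities of the nonnegative part of a lattice-ordered commutative ring with identity (commutative semiring axioms, lattice axioms, distributivity of $+,\cdot$ over $\wedge,\vee$, $0\le x$); (A2) $\inf_y d(x,(x\wedge y)+1)=1-|x|$ and $x\le x^2$; (A3) $d(x+z,y+z)=d(x,y)$; (A4) $d(y,z)\le d(xy,xz)+1-|x|$; (A5) $d(xy,xz)=d(x^ny,x^nz)\le d(y,z)$;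 (A6) $d(nx,ny)=d(x^n,y^n)=d(x,y)$, $n\ge1$; (A7) $|x\wedge y|+|x\vee y|=|x|+|y|$; (A8) $|xy+z|=|(x\wedge y)+z|$; (A9) $|x+y+z|=|(x\vee y)+z|$; (A10) $\inf_t d((x\wedge y)+t,y)=0$. Bounded quantifiers: $\sup_{x\le t}\phi(x):=\sup_x\phi(x\wedge t)$, $\inf_{x\le t}\phi(x):=\inf_x\phi(x\wedge t)$; $\Sigma_0$ formulas are affine formulas with only bounded quantifiers. $M\preccurlyeq_{\Sigma_0}N$ means $\phi^M(\bar a)=\phi^N(\bar a)$ for all $\Sigma_0$ formulas and $\bar a\in M$; $M\preccurlyeq N$ means this for all affine formulas. $N$ is a cofinal extension of $M$ if $M$ is a substructure of $N$ and each $x\in N$ satisfies $x\le y$ for some $y\in M$. *)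

From Stdlib Require Import Reals List.
From Coquelicot Require Import Coquelicot.
Open Scope R_scope.

(* real supremum / infimum of a set of reals (the actual sup/inf when the set
   is nonempty and bounded, which is always the case below) *)
Definition Rsup (S : R -> Prop) : R := real (Lub_Rbar S).
Definition Rinf (S : R -> Prop) : R := real (Glb_Rbar S).

Record Lstruct := {
  car :> Type;
  dst : car -> car -> R;
  add : car -> car -> car;
  mul : car -> car -> car;
  mt  : car -> car -> car;
  jn  : car -> car -> car;
  zr  : car;
  on  : car;
  dst_refl : forall x, dst x x = 0;
  dst_sym : forall x y, dst x y = dst y x;
  dst_tri : forall x y z, dst x z <= dst x y + dst y z;
  dst_sep : forall x y, dst x y = 0 -> x = y;
  dst_ge0 : forall x y, 0 <= dst x y;
  dst_le1 : forall x y, dst x y <= 1;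
  dst_complete : forall u : nat -> car,
    (forall eps, 0 < eps -> exists N, forall n m, (N <= n)%nat -> (N <= m)%nat ->
        dst (u n) (u m) < eps) ->
    exists l, forall eps, 0 < eps -> exists N, forall n, (N <= n)%nat -> dst (u n) l < eps;
  add_lip : forall x y x' y', dst (add x y) (add x' y') <= Rmax (dst x x') (dst y y');
  mul_lip : forall x y x' y', dst (mul x y) (mul x' y') <= Rmax (dst x x') (dst y y');
  mt_lip : forall x y x' y', dst (mt x y) (mt x' y') <= Rmax (dst x x') (dst y y');
  jn_lip : forall x y x' y', dst (jn x y) (jn x' y') <= Rmax (dst x x') (dst y y')
}.

Arguments dst {_}. Arguments add {_}. Arguments mul {_}. Arguments mt {_}.
Arguments jn {_}. Arguments zr {_}. Arguments on {_}.

Inductive term :=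
| TVar (n : nat) | TZero | TOne
| TAdd (t1 t2 : term) | TMul (t1 t2 : term)
| TMeet (t1 t2 : term) | TJoin (t1 t2 : term).

Inductive formula :=
| FOne
| FDist (t1 t2 : term)
| FAdd (p q : formula)
| FScale (r : R) (p : formula)
| FSup (n : nat) (p : formula)
| FInf (n : nat) (p : formula).

Definition upd {M : Lstruct} (a : nat -> M) (n : nat) (x : M) : nat -> M :=
  fun m => if Nat.eqb m n then x else a m.

Fixpoint evalt (M : Lstruct) (a : nat -> M) (t : term) : M :=
  match t with
  | TVar n => a n
  | TZero => zr
  | TOne => on
  | TAdd t1 t2 => add (evalt M a t1) (evalt M a t2)
  | TMul t1 t2 => mul (evalt M a t1) (evalt M a t2)
  | TMeet t1 t2 => mt (evalt M a t1) (evalt M a t2)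
  | TJoin t1 t2 => jn (evalt M a t1) (evalt M a t2)
  end.

Fixpoint eval (M : Lstruct) (a : nat -> M) (p : formula) : R :=
  match p with
  | FOne => 1
  | FDist t1 t2 => dst (evalt M a t1) (evalt M a t2)
  | FAdd p q => eval M a p + eval M a q
  | FScale r p => r * eval M a p
  | FSup n p => Rsup (fun r => exists x : M, r = eval M (upd a n x) p)
  | FInf n p => Rinf (fun r => exists x : M, r = eval M (upd a n x) p)
  end.

Fixpoint var_in_term (n : nat) (t : term) : Prop :=
  match t with
  | TVar m => n = m
  | TZero | TOne => False
  | TAdd t1 t2 | TMul t1 t2 | TMeet t1 t2 | TJoin t1 t2 =>
      var_in_term n t1 \/ var_in_term n t2
  end.

Fixpoint free_in (n : nat) (p : formula) : Prop :=
  match p with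
  | FOne => False
  | FDist t1 t2 => var_in_term n t1 \/ var_in_term n t2
  | FAdd p q => free_in n p \/ free_in n q
  | FScale _ p => free_in n p
  | FSup m p | FInf m p => n <> m /\ free_in n p
  end.

Fixpoint bound_in (n : nat) (p : formula) : Prop :=
  match p with
  | FOne | FDist _ _ => False
  | FAdd p q => bound_in n p \/ bound_in n q
  | FScale _ p => bound_in n p
  | FSup m p | FInf m p => n = m \/ bound_in n p
  end.

Definition closed_formula (p : formula) : Prop := forall n, ~ free_in n p.

(* substitution of a term for (free occurrences of) a variable; it is used
   below only when no variable of s is bound in the formula (no capture) *)
Fixpoint tsubst (x : nat) (s : term) (t : term) : term :=
  match t with
  | TVar m => if Nat.eqb m x then s else TVar m
  | TZero => TZero | TOne => TOne
  | TAdd t1 t2 => TAdd (tsubst x s t1) (tsubst x s t2)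
  | TMul t1 t2 => TMul (tsubst x s t1) (tsubst x s t2)
  | TMeet t1 t2 => TMeet (tsubst x s t1) (tsubst x s t2)
  | TJoin t1 t2 => TJoin (tsubst x s t1) (tsubst x s t2)
  end.

Fixpoint fsubst (x : nat) (s : term) (p : formula) : formula :=
  match p with
  | FOne => FOne
  | FDist t1 t2 => FDist (tsubst x s t1) (tsubst x s t2)
  | FAdd p q => FAdd (fsubst x s p) (fsubst x s q)
  | FScale r p => FScale r (fsubst x s p)
  | FSup m p => if Nat.eqb m x then FSup m p else FSup m (fsubst x s p)
  | FInf m p => if Nat.eqb m x then FInf m p else FInf m (fsubst x s p)
  end.

(* bounded quantifiers: sup_{x <= t} p(x) := sup_x p(x /\ t)  (x not in t) *)
Definition BSup (x : nat) (t : term) (p : formula) : formula :=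
  FSup x (fsubst x (TMeet (TVar x) t) p).
Definition BInf (x : nat) (t : term) (p : formula) : formula :=
  FInf x (fsubst x (TMeet (TVar x) t) p).

Inductive Sigma0 : formula -> Prop :=
| S0_one : Sigma0 FOne
| S0_dist t1 t2 : Sigma0 (FDist t1 t2)
| S0_add p q : Sigma0 p -> Sigma0 q -> Sigma0 (FAdd p q)
| S0_scale r p : Sigma0 p -> Sigma0 (FScale r p)
| S0_bsup x t p : Sigma0 p -> ~ var_in_term x t ->
    (forall y, var_in_term y t -> ~ bound_in y p) -> Sigma0 (BSup x t p)
| S0_binf x t p : Sigma0 p -> ~ var_in_term x t ->
    (forall y, var_in_term y t -> ~ bound_in y p) -> Sigma0 (BInf x t p).

Fixpoint QF (p : formula) : Prop :=
  match p with
  | FOne | FDist _ _ => True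
  | FAdd p q => QF p /\ QF q
  | FScale _ p => QF p
  | FSup _ _ | FInf _ _ => False
  end.

Definition sups (ys : list nat) (p : formula) : formula := fold_right FSup p ys.

Record condition := Cond { lhs : formula; rhs : formula }.

Definition sat (M : Lstruct) (a : nat -> M) (c : condition) : Prop :=
  eval M a (lhs c) <= eval M a (rhs c).

Definition closed_condition (c : condition) : Prop :=
  closed_formula (lhs c) /\ closed_formula (rhs c).

Inductive foformula :=
| FOeq (t1 t2 : term)
| FOneg (p : foformula)
| FOand (p q : foformula)
| FOex (n : nat) (p : foformula).

Fixpoint holds (M : Lstruct) (a : nat -> M) (p : foformula) : Prop :=
  match p with
  | FOeq t1 t2 => evalt M a t1 = evalt M a t2
  | FOneg p => ~ holds M a p
  | FOand p q => holds M a p /\ holds M a q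
  | FOex n p => exists x : M, holds M (upd a n x) p
  end.

(* M is (the L-structure of) a model of first-order PA:
   discrete metric, x <= y iff exists z, x + z = y, meet/join = min/max,
   the basic axioms of PA (successor x+1) and induction for all first-order
   formulas (with parameters). *)
Definition PAmodel (M : Lstruct) : Prop :=
  (forall x y : M, x <> y -> dst x y = 1) /\
  (forall x y : M, (exists z, add x z = y) -> mt x y = x /\ jn x y = y) /\
  (forall x y : M, ~ (exists z, add x z = y) -> mt x y = y /\ jn x y = x) /\
  (forall x : M, add x on <> zr) /\
  (forall x y : M, add x on = add y on -> x = y) /\
  (forall x : M, add x zr = x) /\
  (forall x y : M, add x (add y on) = add (add x y) on) /\
  (forall x : M, mul x zr = zr) /\
  (forall x y : M, mul x (add y on) = add (mul x y) x) /\
  (forall (p : foformula) (n : nat) (a : nat -> M),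
      holds M (upd a n zr) p ->
      (forall x, holds M (upd a n x) p -> holds M (upd a n (add x on)) p) ->
      forall x, holds M (upd a n x) p).

Definition AA (c : condition) : Prop :=
  closed_condition c /\ forall (P : Lstruct) (a : nat -> P), PAmodel P -> sat P a c.

Definition models_AA (M : Lstruct) : Prop :=
  forall c, AA c -> forall a : nat -> M, sat M a c.

Definition le {M : Lstruct} (x y : M) : Prop := mt x y = x.
Definition absv {M : Lstruct} (x : M) : R := dst x zr.

Fixpoint nsum {M : Lstruct} (n : nat) (x : M) : M :=
  match n with O => zr | S O => x | S m => add (nsum m x) x end.
Fixpoint npow {M : Lstruct} (n : nat) (x : M) : M :=
  match n with O => on | S O => x | S m => mul (npow m x) x end.

Definition AA0 (M : Lstruct) : Prop :=
  (forall x y z : M, add (add x y) z = add x (add y z)) /\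
  (forall x y : M, add x y = add y x) /\
  (forall x : M, add x zr = x) /\
  (forall x y z : M, mul (mul x y) z = mul x (mul y z)) /\
  (forall x y : M, mul x y = mul y x) /\
  (forall x : M, mul x on = x) /\
  (forall x y z : M, mul x (add y z) = add (mul x y) (mul x z)) /\
  (forall x : M, mul x zr = zr) /\
  (forall x y z : M, mt (mt x y) z = mt x (mt y z)) /\
  (forall x y : M, mt x y = mt y x) /\
  (forall x y z : M, jn (jn x y) z = jn x (jn y z)) /\
  (forall x y : M, jn x y = jn y x) /\
  (forall x y : M, mt x (jn x y) = x) /\
  (forall x y : M, jn x (mt x y) = x) /\
  (forall x y z : M, add x (mt y z) = mt (add x y) (add x z)) /\
  (forall x y z : M, add x (jn y z) = jn (add x y) (add x z)) /\
  (forall x y z : M, mul x (mt y z) = mt (mul x y) (mul x z)) /\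
  (forall x y z : M, mul x (jn y z) = jn (mul x y) (mul x z)) /\
  (forall x : M, le zr x) /\
  (forall x : M, Rinf (fun r => exists y : M, r = dst x (add (mt x y) on)) = 1 - absv x) /\
  (forall x : M, le x (mul x x)) /\
  (forall x y z : M, dst (add x z) (add y z) = dst x y) /\
  (forall x y z : M, dst y z <= dst (mul x y) (mul x z) + 1 - absv x) /\
  (forall (n : nat) (x y z : M), (1 <= n)%nat ->
      dst (mul x y) (mul x z) = dst (mul (npow n x) y) (mul (npow n x) z) /\
      dst (mul (npow n x) y) (mul (npow n x) z) <= dst y z) /\
  (forall (n : nat) (x y : M), (1 <= n)%nat ->
      dst (nsum n x) (nsum n y) = dst (npow n x) (npow n y) /\
      dst (npow n x) (npow n y) = dst x y) /\
  (forall x y : M, absv (mt x y) + absv (jn x y) = absv x + absv y) /\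
  (forall x y z : M, absv (add (mul x y) z) = absv (add (mt x y) z)) /\
  (forall x y z : M, absv (add (add x y) z) = absv (add (jn x y) z)) /\
  (forall x y : M, Rinf (fun r => exists t : M, r = dst (add (mt x y) t) y) = 0).

Record embedding (M N : Lstruct) := {
  emb :> M -> N;
  emb_dst : forall x y, dst (emb x) (emb y) = dst x y;
  emb_add : forall x y, emb (add x y) = add (emb x) (emb y);
  emb_mul : forall x y, emb (mul x y) = mul (emb x) (emb y);
  emb_mt : forall x y, emb (mt x y) = mt (emb x) (emb y);
  emb_jn : forall x y, emb (jn x y) = jn (emb x) (emb y);
  emb_zr : emb zr = zr;
  emb_on : emb on = on
}.

Definition cofinal {M N : Lstruct} (f : embedding M N) : Prop :=
  forall x : N, exists y : M, le x (f y).

Definition Sigma0_elementary {M N : Lstruct} (f : embedding M N) : Prop :=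
  forall p, Sigma0 p -> forall a : nat -> M, eval M a p = eval N (fun n => f (a n)) p.

Definition elementary {M N : Lstruct} (f : embedding M N) : Prop :=
  forall p, forall a : nat -> M, eval M a p = eval N (fun n => f (a n)) p.

Definition affine_MRDP : Prop :=
  forall phi, Sigma0 phi ->
    exists (psi : formula) (ys : list nat),
      QF psi /\
      (forall y, In y ys -> ~ free_in y phi) /\
      (forall n, free_in n psi -> free_in n phi \/ In n ys) /\
      forall (M : Lstruct), models_AA M ->
        forall a : nat -> M, eval M a phi = eval M a (sups ys psi).

(* (iii) => (ii) because AA consists of closed conditions, and (ii) => (i) because, under affine
   MRDP, a Sigma_0 formula and its negative are both sups of quantifier-free formulas, whose values
   can only grow along an embedding.

   For (i) => (iii), write every formula with [sup] as its only quantifier and approximate it,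
   uniformly on parameters below a given bound, by the Sigma_0 formula whose sups are bounded by
   extra parameters from M.  The bounds come from collection: for all b and eps there is B such
   that restricting [sup_y] to [y <= B] loses at most eps on parameters below b.  This is an affine
   condition valid in models of PA (sups are attained there and PA proves collection), hence it
   holds in M.  It passes to N because cofinality bounds any witness in N by some b' in M, and the
   resulting statement is a Sigma_0 sentence with parameters in M.  Sigma_0-elementarity then
   transfers the approximations, and with them the value of every formula. *)

From Stdlib Require Import Reals List Lra Lia Classical FunctionalExtensionality.
From Coquelicot Require Import Coquelicot.
Open Scope R_scope.

Lemma Lub_Rbar_bounded (S : R -> Prop) (B r : R) :
  (forall s, S s -> s <= B) -> S r -> Lub_Rbar S = Finite (Rsup S).
Proof.
  intros HB Hr. unfold Rsup. destruct (Lub_Rbar_correct S) as [Hub Hleast].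
  assert (Hle : Rbar_le (Lub_Rbar S) B) by (apply Hleast; intros s Hs; apply HB, Hs).
  specialize (Hub r Hr). destruct (Lub_Rbar S); easy.
Qed.

Lemma Glb_Rbar_bounded (S : R -> Prop) (B r : R) :
  (forall s, S s -> B <= s) -> S r -> Glb_Rbar S = Finite (Rinf S).
Proof.
  intros HB Hr. unfold Rinf. destruct (Glb_Rbar_correct S) as [Hlb Hgreatest].
  assert (Hge : Rbar_le B (Glb_Rbar S)) by (apply Hgreatest; intros s Hs; apply HB, Hs).
  specialize (Hlb r Hr). destruct (Glb_Rbar S); easy.
Qed.

Section ImageSupInf.

Variables (T : Type) (F : T -> R).

Let image := fun r => exists x, r = F x.

Lemma Rsup_image_ge (B : R) (y : T) :
  (forall x, F x <= B) -> F y <= Rsup image.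
Proof.
  intros HB. destruct (Lub_Rbar_correct image) as [Hub _].
  rewrite (Lub_Rbar_bounded image B (F y)) in Hub.
  - apply (Hub (F y)). now exists y.
  - intros s [x ->]. apply HB.
  - now exists y.
Qed.

Lemma Rsup_image_le (m : R) :
  inhabited T -> (forall x, F x <= m) -> Rsup image <= m.
Proof.
  intros [y] Hm. destruct (Lub_Rbar_correct image) as [_ Hleast].
  rewrite (Lub_Rbar_bounded image m (F y)) in Hleast.
  - apply (Hleast m). intros s [x ->]. apply Hm.
  - intros s [x ->]. apply Hm.
  - now exists y.
Qed.

Lemma Rinf_image_le (B : R) (y : T) :
  (forall x, B <= F x) -> Rinf image <= F y.
Proof.
  intros HB. destruct (Glb_Rbar_correct image) as [Hlb _].
  rewrite (Glb_Rbar_bounded image B (F y)) in Hlb.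
  - apply (Hlb (F y)). now exists y.
  - intros s [x ->]. apply HB.
  - now exists y.
Qed.

Lemma Rinf_image_ge (m : R) :
  inhabited T -> (forall x, m <= F x) -> m <= Rinf image.
Proof.
  intros [y] Hm. destruct (Glb_Rbar_correct image) as [_ Hgreatest].
  rewrite (Glb_Rbar_bounded image m (F y)) in Hgreatest.
  - apply (Hgreatest m). intros s [x ->]. apply Hm.
  - intros s [x ->]. apply Hm.
  - now exists y.
Qed.

Lemma Rinf_image_lt (B c : R) :
  inhabited T -> (forall x, B <= F x) -> Rinf image < c -> exists x, F x < c.
Proof.
  intros HT HB Hc. apply NNPP. intros Hnone.
  enough (c <= Rinf image) by lra.
  apply Rinf_image_ge; auto. intros x. apply Rnot_lt_le. eauto.
Qed.

End ImageSupInf.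

Lemma Rsup_image_ext {T : Type} (F G : T -> R) :
  (forall x, F x = G x) ->
  Rsup (fun r => exists x, r = F x) = Rsup (fun r => exists x, r = G x).
Proof. intros H. replace G with F by (extensionality x; auto). reflexivity. Qed.

Lemma Rinf_image_ext {T : Type} (F G : T -> R) :
  (forall x, F x = G x) ->
  Rinf (fun r => exists x, r = F x) = Rinf (fun r => exists x, r = G x).
Proof. intros H. replace G with F by (extensionality x; auto). reflexivity. Qed.

Section Valuations.

Context {X : Lstruct}.
Implicit Types (a : nat -> X) (x y : X).

Lemma upd_eq a n x : upd a n x n = x.
Proof. unfold upd. now rewrite Nat.eqb_refl. Qed.

Lemma upd_neq a n x m : m <> n -> upd a n x m = a m.
Proof. intros H. unfold upd. now destruct (Nat.eqb_spec m n). Qed.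

Lemma upd_shadow a n x y : upd (upd a n x) n y = upd a n y.
Proof. extensionality m. unfold upd. now destruct (Nat.eqb m n). Qed.

Lemma upd_comm a n m x y : n <> m -> upd (upd a n x) m y = upd (upd a m y) n x.
Proof.
  intros H. extensionality k. unfold upd.
  destruct (Nat.eqb_spec k m), (Nat.eqb_spec k n); congruence.
Qed.

Lemma upd_id a n : upd a n (a n) = a.
Proof. extensionality k. unfold upd. destruct (Nat.eqb_spec k n); congruence. Qed.

End Valuations.

Ltac simpl_upd := repeat (rewrite upd_eq || rewrite upd_neq by lia).
Ltac simpl_upd_in H := repeat (rewrite upd_eq in H || rewrite upd_neq in H by lia).

Lemma comp_upd {A B : Lstruct} (f : A -> B) (a : nat -> A) n x :
  (fun m => f (upd a n x m)) = upd (fun m => f (a m)) n (f x).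
Proof. extensionality m. unfold upd. now destruct (Nat.eqb m n). Qed.

Fixpoint fbound (p : formula) : R :=
  match p with
  | FOne | FDist _ _ => 1
  | FAdd p q => fbound p + fbound q
  | FScale r p => Rabs r * fbound p
  | FSup _ p | FInf _ p => fbound p
  end.

Lemma eval_abs_le (X : Lstruct) p : forall a, Rabs (eval X a p) <= fbound p.
Proof.
  induction p as [| t1 t2 | p IHp q IHq | r p IHp | n p IHp | n p IHp]; intros a; simpl.
  - rewrite Rabs_R1. lra.
  - pose proof (dst_ge0 X (evalt X a t1) (evalt X a t2)).
    pose proof (dst_le1 X (evalt X a t1) (evalt X a t2)).
    rewrite Rabs_right; lra.
  - eapply Rle_trans; [apply Rabs_triang|]. specialize (IHp a). specialize (IHq a). lra.
  - rewrite Rabs_mult. apply Rmult_le_compat_l; [apply Rabs_pos | apply IHp].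
  - assert (Hb : forall x, Rabs (eval X (upd a n x) p) <= fbound p) by auto.
    apply Rabs_le. split.
    + eapply Rle_trans; [|apply (Rsup_image_ge _ _ (fbound p) zr)].
      * specialize (Hb zr). apply Rabs_le_between in Hb. lra.
      * intros x. specialize (Hb x). apply Rabs_le_between in Hb. lra.
    + apply Rsup_image_le; [exact (inhabits zr)|].
      intros x. specialize (Hb x). apply Rabs_le_between in Hb. lra.
  - assert (Hb : forall x, Rabs (eval X (upd a n x) p) <= fbound p) by auto.
    apply Rabs_le. split.
    + apply Rinf_image_ge; [exact (inhabits zr)|].
      intros x. specialize (Hb x). apply Rabs_le_between in Hb. lra.
    + eapply Rle_trans; [apply (Rinf_image_le _ _ (- fbound p) zr)|].
      * intros x. specialize (Hb x). apply Rabs_le_between in Hb. lra.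
      * specialize (Hb zr). apply Rabs_le_between in Hb. lra.
Qed.

Lemma eval_le_fbound X a p : eval X a p <= fbound p.
Proof. pose proof (eval_abs_le X p a) as H. apply Rabs_le_between in H. lra. Qed.

Lemma eval_ge_fbound X a p : - fbound p <= eval X a p.
Proof. pose proof (eval_abs_le X p a) as H. apply Rabs_le_between in H. lra. Qed.

Section EvalFamilies.

Variables (X : Lstruct) (p : formula) (T : Type) (F : T -> nat -> X).

Lemma Rsup_eval_ge y : eval X (F y) p <= Rsup (fun r => exists y, r = eval X (F y) p).
Proof. apply (Rsup_image_ge T (fun y => eval X (F y) p) (fbound p)). intros; apply eval_le_fbound. Qed.

Lemma Rsup_eval_le m :
  inhabited T -> (forall y, eval X (F y) p <= m) ->
  Rsup (fun r => exists y, r = eval X (F y) p) <= m.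
Proof. apply Rsup_image_le. Qed.

Lemma Rinf_eval_le y : Rinf (fun r => exists y, r = eval X (F y) p) <= eval X (F y) p.
Proof. apply (Rinf_image_le T (fun y => eval X (F y) p) (- fbound p)). intros; apply eval_ge_fbound. Qed.

End EvalFamilies.

Lemma Rsup_eval_close (X : Lstruct) p q (T : Type) (F G : T -> nat -> X) d :
  inhabited T -> (forall y, Rabs (eval X (F y) p - eval X (G y) q) <= d) ->
  Rabs (Rsup (fun r => exists y, r = eval X (F y) p) -
        Rsup (fun r => exists y, r = eval X (G y) q)) <= d.
Proof.
  intros HT Hclose. apply Rabs_le. split.
  - enough (Rsup (fun r => exists y, r = eval X (G y) q) <=
            Rsup (fun r => exists y, r = eval X (F y) p) + d) by lra.
    apply Rsup_eval_le; auto. intros y. specialize (Hclose y). apply Rabs_le_between in Hclose.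
    pose proof (Rsup_eval_ge X p T F y). lra.
  - enough (Rsup (fun r => exists y, r = eval X (F y) p) <=
            Rsup (fun r => exists y, r = eval X (G y) q) + d) by lra.
    apply Rsup_eval_le; auto. intros y. specialize (Hclose y). apply Rabs_le_between in Hclose.
    pose proof (Rsup_eval_ge X q T G y). lra.
Qed.

Section QuantifierBounds.

Variables (X : Lstruct) (a : nat -> X) (n : nat) (p : formula).

Lemma eval_FSup_ge x : eval X (upd a n x) p <= eval X a (FSup n p).
Proof. apply (Rsup_eval_ge X p X (upd a n)). Qed.

Lemma eval_FSup_le m : (forall x, eval X (upd a n x) p <= m) -> eval X a (FSup n p) <= m.
Proof. apply Rsup_eval_le. exact (inhabits zr). Qed.

Lemma eval_FInf_le x : eval X a (FInf n p) <= eval X (upd a n x) p.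
Proof. apply (Rinf_eval_le X p X (upd a n)). Qed.

Lemma eval_FSup_upd x : eval X (upd a n x) (FSup n p) = eval X a (FSup n p).
Proof. simpl. apply Rsup_image_ext. intros y. now rewrite upd_shadow. Qed.

End QuantifierBounds.

Lemma evalt_ext (X : Lstruct) t : forall a a' : nat -> X,
  (forall n, var_in_term n t -> a n = a' n) -> evalt X a t = evalt X a' t.
Proof. induction t; intros a a' H; simpl in *; f_equal; auto. Qed.

Lemma eval_ext (X : Lstruct) p : forall a a' : nat -> X,
  (forall n, free_in n p -> a n = a' n) -> eval X a p = eval X a' p.
Proof.
  induction p; intros a a' H; simpl in *; try (f_equal; auto using evalt_ext; fail).
  - apply Rsup_image_ext. intros y. apply IHp. intros m Hm. unfold upd.
    destruct (Nat.eqb_spec m n); auto.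
  - apply Rinf_image_ext. intros y. apply IHp. intros m Hm. unfold upd.
    destruct (Nat.eqb_spec m n); auto.
Qed.

Lemma eval_closed (X : Lstruct) p (a a' : nat -> X) :
  closed_formula p -> eval X a p = eval X a' p.
Proof. intros Hp. apply eval_ext. intros n Hn. destruct (Hp n Hn). Qed.

Lemma tsubst_eval (X : Lstruct) x s t (a : nat -> X) :
  evalt X a (tsubst x s t) = evalt X (upd a x (evalt X a s)) t.
Proof. induction t; simpl; try congruence. unfold upd. now destruct (Nat.eqb n x). Qed.

Lemma evalt_upd_notin (X : Lstruct) t (a : nat -> X) n x :
  ~ var_in_term n t -> evalt X (upd a n x) t = evalt X a t.
Proof. intros H. apply evalt_ext. intros m Hm. apply upd_neq. congruence. Qed.

Lemma fsubst_eval (X : Lstruct) x s p : forall (a : nat -> X),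
  (forall y, var_in_term y s -> y <> x -> ~ bound_in y p) ->
  eval X a (fsubst x s p) = eval X (upd a x (evalt X a s)) p.
Proof.
  induction p; intros a Hs; simpl in *.
  - reflexivity.
  - now rewrite !tsubst_eval.
  - rewrite IHp1, IHp2; auto; intros y H1 H2 H3; eapply Hs; eauto.
  - rewrite IHp; auto.
  - destruct (Nat.eqb_spec n x) as [-> | Hnx]; simpl; apply Rsup_image_ext; intros y.
    + now rewrite upd_shadow.
    + rewrite IHp by (intros z H1 H2 H3; eapply Hs; eauto).
      rewrite evalt_upd_notin by (intros Hn; eapply Hs; eauto).
      now rewrite upd_comm.
  - destruct (Nat.eqb_spec n x) as [-> | Hnx]; simpl; apply Rinf_image_ext; intros y.
    + now rewrite upd_shadow.
    + rewrite IHp by (intros z H1 H2 H3; eapply Hs; eauto).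
      rewrite evalt_upd_notin by (intros Hn; eapply Hs; eauto).
      now rewrite upd_comm.
Qed.

Lemma bound_in_fsubst x s p y : bound_in y (fsubst x s p) <-> bound_in y p.
Proof. induction p; simpl; try tauto; destruct (Nat.eqb n x); simpl; tauto. Qed.

Lemma var_in_tsubst x s t y :
  var_in_term y (tsubst x s t) -> (var_in_term y t /\ y <> x) \/ var_in_term y s.
Proof.
  induction t; simpl; intros H; try tauto.
  destruct (Nat.eqb_spec n x); subst; auto. simpl in H. subst. auto.
Qed.

Lemma free_in_fsubst x s p y :
  free_in y (fsubst x s p) -> (free_in y p /\ y <> x) \/ var_in_term y s.
Proof.
  induction p; simpl; intros H; try tauto.
  - destruct H as [H | H]; apply var_in_tsubst in H; tauto.
  - destruct (Nat.eqb_spec n x); simpl in H; [subst; tauto|].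
    destruct H as [H1 H2]. apply IHp in H2. tauto.
  - destruct (Nat.eqb_spec n x); simpl in H; [subst; tauto|].
    destruct H as [H1 H2]. apply IHp in H2. tauto.
Qed.

Lemma BSup_eval (X : Lstruct) x t p (a : nat -> X) :
  ~ var_in_term x t -> (forall y, var_in_term y t -> ~ bound_in y p) ->
  eval X a (BSup x t p) =
  Rsup (fun r => exists z, r = eval X (upd a x (mt z (evalt X a t))) p).
Proof.
  intros Hx Ht. unfold BSup. simpl. apply Rsup_image_ext. intros z.
  rewrite fsubst_eval.
  - simpl. now rewrite upd_eq, upd_shadow, evalt_upd_notin.
  - intros y Hy Hne. simpl in Hy. destruct Hy as [Hy | Hy]; [congruence | auto].
Qed.

(** * Embeddings and the implications (iii) => (ii) => (i) *)

Section Embeddings.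

Variables (M N : Lstruct) (f : embedding M N).

Lemma evalt_emb (a : nat -> M) t : f (evalt M a t) = evalt N (fun n => f (a n)) t.
Proof.
  induction t; simpl; auto using emb_zr, emb_on.
  - rewrite emb_add; congruence.
  - rewrite emb_mul; congruence.
  - rewrite emb_mt; congruence.
  - rewrite emb_jn; congruence.
Qed.

Lemma emb_le (x y : M) : le x y -> le (f x) (f y).
Proof. unfold le. intros H. rewrite <- emb_mt. congruence. Qed.

Lemma eval_QF_emb p (a : nat -> M) : QF p -> eval M a p = eval N (fun n => f (a n)) p.
Proof.
  induction p; simpl; intros H; try tauto.
  - rewrite <- !evalt_emb. symmetry. apply emb_dst.
  - destruct H. f_equal; auto.
  - f_equal; auto.
Qed.

Lemma eval_sups_QF_emb_le psi ys (a : nat -> M) :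
  QF psi -> eval M a (sups ys psi) <= eval N (fun n => f (a n)) (sups ys psi).
Proof.
  intros Hq. revert a. induction ys as [|y ys IH]; intros a; simpl.
  - rewrite (eval_QF_emb psi a Hq). lra.
  - apply eval_FSup_le. intros x. eapply Rle_trans; [apply IH|].
    rewrite comp_upd. apply (eval_FSup_ge N _ y (sups ys psi)).
Qed.

Lemma elementary_models_AA : elementary f -> models_AA M -> models_AA N.
Proof.
  intros Hel HM c Hc a. pose proof (HM c Hc (fun _ => zr)) as Hsat.
  destruct Hc as [[Hl Hr] _]. unfold sat in *.
  rewrite (eval_closed N (lhs c) a (fun _ => f zr) Hl),
          (eval_closed N (rhs c) a (fun _ => f zr) Hr).
  now rewrite <- !Hel.
Qed.

Lemma Sigma0_elementary_of_MRDP :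
  affine_MRDP -> models_AA M -> models_AA N -> Sigma0_elementary f.
Proof.
  intros HMRDP HM HN.
  assert (Hup : forall p, Sigma0 p -> forall a, eval M a p <= eval N (fun n => f (a n)) p).
  { intros p Hp a. destruct (HMRDP p Hp) as (psi & ys & Hq & _ & _ & Heq).
    rewrite (Heq M HM a), (Heq N HN). now apply eval_sups_QF_emb_le. }
  intros p Hp a. apply Rle_antisym; [now apply Hup|].
  pose proof (Hup (FScale (-1) p) (S0_scale _ _ Hp) a) as H. simpl in H. lra.
Qed.

End Embeddings.

Definition lattice_laws (X : Lstruct) : Prop :=
  (forall x y z : X, mt (mt x y) z = mt x (mt y z)) /\
  (forall x y : X, mt x y = mt y x) /\
  (forall x y : X, jn x y = jn y x) /\
  (forall x y : X, mt x (jn x y) = x) /\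
  (forall x y : X, jn x (mt x y) = x).

Lemma AA0_lattice_laws X : AA0 X -> lattice_laws X.
Proof.
  intros (_ & _ & _ & _ & _ & _ & _ & _ & HmA & HmC & _ & HjC & Hmj & Hjm & _).
  repeat split; auto.
Qed.

Definition bounded {X : Lstruct} (K : nat) (b : X) (g : nat -> X) : Prop :=
  forall i, (i < K)%nat -> le (g i) b.

Definition bounded_except {X : Lstruct} (K n : nat) (b : X) (g : nat -> X) : Prop :=
  forall i, (i < K)%nat -> i <> n -> le (g i) b.

Section Lattice.

Variables (X : Lstruct) (HL : lattice_laws X).

Lemma mt_idem (x : X) : mt x x = x.
Proof. destruct HL as (_ & _ & _ & Hmj & Hjm). rewrite <- (Hjm x x) at 2. apply Hmj. Qed.

Lemma lat_le_trans (x y z : X) : le x y -> le y z -> le x z.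
Proof. unfold le. intros H1 H2. rewrite <- H1. destruct HL as [HmA _]. now rewrite HmA, H2. Qed.

Lemma mt_le_r (y c : X) : le (mt y c) c.
Proof. unfold le. destruct HL as [HmA _]. now rewrite HmA, mt_idem. Qed.

Lemma le_jn_l (x y : X) : le x (jn x y).
Proof. apply HL. Qed.

Lemma le_jn_r (x y : X) : le y (jn x y).
Proof. unfold le. destruct HL as (_ & _ & HjC & Hmj & _). now rewrite HjC. Qed.

Fixpoint join_below (g : nat -> X) (k : nat) : X :=
  match k with O => zr | S k => jn (g k) (join_below g k) end.

Lemma bounded_join_below (g : nat -> X) K : bounded K (join_below g K) g.
Proof.
  induction K as [|K IH]; intros i Hi; [lia|]. simpl.
  destruct (Nat.eq_dec i K) as [-> | Hne]; [apply le_jn_l|].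
  apply lat_le_trans with (join_below g K); [apply IH; lia | apply le_jn_r].
Qed.

Lemma bounded_except_weaken K n (b B : X) g :
  bounded_except K n b g -> le b B -> bounded_except K n B g.
Proof. intros Hg HbB i Hi Hin. apply lat_le_trans with b; auto. Qed.

Lemma bounded_upd K n (b x : X) g : bounded_except K n b g -> le x b -> bounded K b (upd g n x).
Proof.
  intros Hg Hx i Hi. unfold upd. destruct (Nat.eqb_spec i n); auto.
Qed.

Lemma bounded_upd_mt K n (b B y : X) g :
  bounded_except K n b g -> le b B -> bounded K B (upd g n (mt y B)).
Proof. intros Hg HbB. apply bounded_upd; [now apply bounded_except_weaken with b | apply mt_le_r]. Qed.

End Lattice.

Lemma bounded_bounded_except {X : Lstruct} K n (b : X) g :
  bounded K b g -> bounded_except K n b g.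
Proof. intros H i Hi _. auto. Qed.

Lemma bounded_emb {M N : Lstruct} (f : embedding M N) K (b : M) g :
  bounded K b g -> bounded K (f b) (fun j => f (g j)).
Proof. intros H i Hi. apply emb_le. auto. Qed.

(** * Sup-formulas and their bounded approximations *)

Fixpoint vars_below (K : nat) (t : term) : Prop :=
  match t with
  | TVar n => (n < K)%nat
  | TZero | TOne => True
  | TAdd t1 t2 | TMul t1 t2 | TMeet t1 t2 | TJoin t1 t2 => vars_below K t1 /\ vars_below K t2
  end.

Fixpoint sup_form (K : nat) (p : formula) : Prop :=
  match p with
  | FOne => True
  | FDist t1 t2 => vars_below K t1 /\ vars_below K t2
  | FAdd p q => sup_form K p /\ sup_form K q
  | FScale _ p => sup_form K p
  | FSup n p => (n < K)%nat /\ sup_form K p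
  | FInf _ _ => False
  end.

Lemma vars_below_var K t n : vars_below K t -> var_in_term n t -> (n < K)%nat.
Proof. induction t; simpl; intros; subst; tauto. Qed.

Lemma vars_below_mono K K' t : (K <= K')%nat -> vars_below K t -> vars_below K' t.
Proof. intros HK. induction t; simpl; intuition lia. Qed.

Lemma vars_below_exists t : exists K, vars_below K t.
Proof.
  induction t; simpl.
  - exists (S n). lia.
  - now exists 0%nat.
  - now exists 0%nat.
  all: destruct IHt1 as [K1 H1], IHt2 as [K2 H2]; exists (K1 + K2)%nat;
    split; [apply vars_below_mono with K1 | apply vars_below_mono with K2]; auto; lia.
Qed.

Lemma sup_form_mono K K' p : (K <= K')%nat -> sup_form K p -> sup_form K' p.
Proof. intros HK. induction p; simpl; intuition (eauto using vars_below_mono; lia). Qed.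

Lemma sup_form_bound_in K p n : sup_form K p -> bound_in n p -> (n < K)%nat.
Proof. induction p; simpl; intros; try tauto. destruct H0; subst; tauto. Qed.

Lemma sup_form_free_in K p n : sup_form K p -> free_in n p -> (n < K)%nat.
Proof.
  induction p; simpl; intros Hp Hn; try tauto.
  destruct Hp, Hn; eauto using vars_below_var.
Qed.

Lemma eval_sup_form_ext (X : Lstruct) K p (a a' : nat -> X) :
  sup_form K p -> (forall j, (j < K)%nat -> a j = a' j) -> eval X a p = eval X a' p.
Proof. intros Hp H. apply eval_ext. intros n Hn. eauto using sup_form_free_in. Qed.

Fixpoint sup_normal (p : formula) : formula :=
  match p with
  | FAdd p q => FAdd (sup_normal p) (sup_normal q)
  | FScale r p => FScale r (sup_normal p)
  | FSup n p => FSup n (sup_normal p)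
  | FInf n p => FScale (-1) (FSup n (FScale (-1) (sup_normal p)))
  | _ => p
  end.

Lemma eval_sup_normal (X : Lstruct) p : forall a, eval X a (sup_normal p) = eval X a p.
Proof.
  induction p; intros a; simpl; auto.
  - now rewrite IHp1, IHp2.
  - now rewrite IHp.
  - apply Rsup_image_ext. auto.
  - rewrite (Rsup_image_ext _ (fun x => -1 * eval X (upd a n x) p)) by (intros; now rewrite IHp).
    apply Rle_antisym.
    + apply Rinf_image_ge; [exact (inhabits zr)|]. intros x.
      enough (-1 * eval X (upd a n x) p <=
              Rsup (fun r => exists x, r = -1 * eval X (upd a n x) p)) by lra.
      apply (Rsup_image_ge X (fun x => -1 * eval X (upd a n x) p) (fbound p)). intros y.
      pose proof (eval_ge_fbound X (upd a n y) p). lra.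
    + enough (Rsup (fun r => exists x, r = -1 * eval X (upd a n x) p) <=
              - Rinf (fun r => exists x, r = eval X (upd a n x) p)) by lra.
      apply Rsup_image_le; [exact (inhabits zr)|]. intros x.
      pose proof (Rinf_eval_le X p X (upd a n) x). lra.
Qed.

Lemma sup_form_sup_normal p : exists K, sup_form K (sup_normal p).
Proof.
  induction p; simpl.
  - now exists 0%nat.
  - destruct (vars_below_exists t1) as [K1 H1], (vars_below_exists t2) as [K2 H2].
    exists (K1 + K2)%nat.
    split; [apply vars_below_mono with K1 | apply vars_below_mono with K2]; auto; lia.
  - destruct IHp1 as [K1 H1], IHp2 as [K2 H2]. exists (K1 + K2)%nat.
    split; [apply sup_form_mono with K1 | apply sup_form_mono with K2]; auto; lia.
  - auto.
  - destruct IHp as [K H]. exists (K + S n)%nat.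
    split; [lia | apply sup_form_mono with K; auto; lia].
  - destruct IHp as [K H]. exists (K + S n)%nat.
    split; [lia | apply sup_form_mono with K; auto; lia].
Qed.

Definition merge {X : Lstruct} (K : nat) (g h : nat -> X) : nat -> X :=
  fun j => if Nat.ltb j K then g j else h j.

Section Merge.

Context {X : Lstruct}.
Variables (K : nat) (g h : nat -> X).

Lemma merge_lt j : (j < K)%nat -> merge K g h j = g j.
Proof. intros. unfold merge. destruct (Nat.ltb_spec j K); auto; lia. Qed.

Lemma merge_ge j : (K <= j)%nat -> merge K g h j = h j.
Proof. intros. unfold merge. destruct (Nat.ltb_spec j K); auto; lia. Qed.

Lemma merge_upd n x : (n < K)%nat -> merge K (upd g n x) h = upd (merge K g h) n x.
Proof.
  intros Hn. extensionality j. unfold merge, upd.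
  destruct (Nat.eqb_spec j n) as [-> |]; [destruct (Nat.ltb_spec n K); auto; lia|].
  now destruct (Nat.ltb j K).
Qed.

Lemma eval_merge_sup_form p : sup_form K p -> eval X (merge K g h) p = eval X g p.
Proof. intros Hp. apply (eval_sup_form_ext X K); auto using merge_lt. Qed.

End Merge.

Lemma merge_merge {X : Lstruct} K (g h h' : nat -> X) : merge K (merge K g h) h' = merge K g h'.
Proof. extensionality j. unfold merge. now destruct (Nat.ltb j K). Qed.

Lemma comp_merge {A B : Lstruct} (f : A -> B) K (g h : nat -> A) :
  (fun j => f (merge K g h j)) = merge K (fun j => f (g j)) (fun j => f (h j)).
Proof. extensionality j. unfold merge. now destruct (Nat.ltb j K). Qed.

Fixpoint fsize (p : formula) : nat :=
  match p with
  | FOne | FDist _ _ => 1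
  | FAdd p q => S (fsize p + fsize q)
  | FScale _ p | FSup _ p | FInf _ p => S (fsize p)
  end.

(* The [j]-th sup of [p] (in preorder, counting from [o]) becomes a sup bounded by the
   variable [K + o + j]; indices [K + o + j] with [j < fsize p] are reserved for [p]. *)
Fixpoint bound_sups (K o : nat) (p : formula) : formula :=
  match p with
  | FAdd p q => FAdd (bound_sups K o p) (bound_sups K (o + fsize p) q)
  | FScale r p => FScale r (bound_sups K o p)
  | FSup n p => BSup n (TVar (K + o)) (bound_sups K (S o) p)
  | _ => p
  end.

Lemma bound_sups_bound_in K p : forall o y,
  sup_form K p -> bound_in y (bound_sups K o p) -> (y < K)%nat.
Proof.
  induction p; intros o y Hp Hy; simpl in *; try tauto.
  - destruct Hp, Hy; eauto.
  - eauto.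
  - unfold BSup in Hy. simpl in Hy. destruct Hp as [Hn Hp].
    destruct Hy as [-> | Hy]; auto. apply bound_in_fsubst in Hy. eauto.
Qed.

Lemma Sigma0_bound_sups K p : forall o, sup_form K p -> Sigma0 (bound_sups K o p).
Proof.
  induction p; intros o Hp; simpl in *; try tauto.
  - constructor.
  - constructor.
  - destruct Hp. constructor; auto.
  - constructor; auto.
  - destruct Hp as [Hn Hp]. constructor; auto.
    + simpl. lia.
    + intros y Hy Hb. simpl in Hy. subst. apply bound_sups_bound_in in Hb; auto. lia.
Qed.

Section BoundSups.

Variables (X : Lstruct) (K : nat).

Lemma bound_sups_FSup_eval o n p (a : nat -> X) :
  sup_form K (FSup n p) ->
  eval X a (bound_sups K o (FSup n p)) =
  Rsup (fun r => exists z, r = eval X (upd a n (mt z (a (K + o)%nat))) (bound_sups K (S o) p)).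
Proof.
  intros [Hn Hp]. simpl bound_sups. rewrite BSup_eval; auto.
  - simpl. lia.
  - intros y Hy Hb. simpl in Hy. subst. apply bound_sups_bound_in in Hb; auto. lia.
Qed.

Lemma bound_sups_ext p : forall o (a1 a2 : nat -> X), sup_form K p ->
  (forall j, (j < K)%nat -> a1 j = a2 j) ->
  (forall j, (o <= j < o + fsize p)%nat -> a1 (K + j)%nat = a2 (K + j)%nat) ->
  eval X a1 (bound_sups K o p) = eval X a2 (bound_sups K o p).
Proof.
  induction p; intros o a1 a2 Hp H1 H2; simpl in Hp; try tauto.
  - destruct Hp. simpl. f_equal; apply evalt_ext; intros m Hm; apply H1;
      eauto using vars_below_var.
  - destruct Hp. simpl. f_equal.
    + apply IHp1; auto. intros j Hj. apply H2. simpl. lia.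
    + apply IHp2; auto. intros j Hj. apply H2. simpl. lia.
  - simpl. f_equal. apply IHp; auto. intros j Hj. apply H2. simpl. lia.
  - rewrite !bound_sups_FSup_eval by auto. rewrite (H2 o) by (simpl; lia).
    apply Rsup_image_ext. intros z. destruct Hp. apply IHp; auto.
    + intros j Hj. unfold upd. destruct (Nat.eqb j n); auto.
    + intros j Hj. unfold upd. destruct (Nat.eqb_spec (K + j) n); [lia|].
      apply H2. simpl. lia.
Qed.

Lemma bound_sups_merge_ext o p (g h1 h2 : nat -> X) : sup_form K p ->
  (forall j, (o <= j < o + fsize p)%nat -> h1 (K + j)%nat = h2 (K + j)%nat) ->
  eval X (merge K g h1) (bound_sups K o p) = eval X (merge K g h2) (bound_sups K o p).
Proof.
  intros Hp H. apply bound_sups_ext; auto.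
  - intros j Hj. now rewrite !merge_lt.
  - intros j Hj. rewrite !merge_ge by lia. auto.
Qed.

Lemma bound_sups_FSup_merge_eval o n p (g h : nat -> X) B :
  sup_form K (FSup n p) ->
  eval X (merge K g (upd h (K + o) B)) (bound_sups K o (FSup n p)) =
  Rsup (fun r => exists y, r = eval X (merge K (upd g n (mt y B)) h) (bound_sups K (S o) p)).
Proof.
  intros Hp. rewrite bound_sups_FSup_eval by auto. rewrite merge_ge, upd_eq by lia.
  apply Rsup_image_ext. intros y. destruct Hp as [Hn Hp].
  rewrite <- merge_upd by auto. apply bound_sups_merge_ext; auto.
  intros j Hj. apply upd_neq. lia.
Qed.

End BoundSups.

Definition bsups (l : list (nat * nat)) (body : formula) : formula :=
  fold_right (fun ik acc => BSup (fst ik) (TVar (snd ik)) acc) body l.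

Definition bsups_ok (K : nat) (l : list (nat * nat)) : Prop :=
  forall ik, In ik l -> (fst ik < K)%nat /\ (K <= snd ik)%nat.

Section BoundedSups.

Variables (K : nat) (body : formula).
Hypothesis body_bound : forall z, bound_in z body -> (z < K)%nat.

Lemma bsups_ok_cons ik l : bsups_ok K (ik :: l) ->
  bsups_ok K l /\ (fst ik < K)%nat /\ (K <= snd ik)%nat.
Proof. intros H. split; [intros q Hq|]; apply H; simpl; auto. Qed.

Lemma bsups_bound_in l y : bsups_ok K l -> bound_in y (bsups l body) -> (y < K)%nat.
Proof.
  induction l as [|[i k] l IH]; simpl; intros Hl H; auto.
  apply bsups_ok_cons in Hl. simpl in Hl. unfold BSup in H. simpl in H.
  destruct H as [-> | H]; [tauto|]. apply bound_in_fsubst in H. apply IH; tauto.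
Qed.

Lemma Sigma0_bsups l : bsups_ok K l -> Sigma0 body -> Sigma0 (bsups l body).
Proof.
  induction l as [|[i k] l IH]; simpl; intros Hl H; auto.
  apply bsups_ok_cons in Hl as (Hl & Hi & Hk). simpl in Hi, Hk.
  constructor; auto.
  - simpl. lia.
  - intros y Hy Hb. simpl in Hy. subst. apply bsups_bound_in in Hb; auto. lia.
Qed.

Lemma free_in_bsups m l : free_in m (bsups l body) ->
  (free_in m body /\ ~ In m (map fst l)) \/ exists ik, In ik l /\ m = snd ik.
Proof.
  induction l as [|[i k] l IH]; simpl; intros H; [auto|].
  unfold BSup in H. simpl in H. destruct H as [H1 H2].
  apply free_in_fsubst in H2 as [[H2 _] | H2].
  - apply IH in H2 as [[H2 H3] | [ik [H2 H3]]].
    + left. split; auto. intros [E | E]; auto.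
    + right. exists ik; auto.
  - simpl in H2. destruct H2 as [H2 | H2]; [congruence|]. right. exists (i, k); auto.
Qed.

Variable X : Lstruct.

Lemma bsups_cons_eval i k l (a : nat -> X) :
  bsups_ok K ((i, k) :: l) ->
  eval X a (bsups ((i, k) :: l) body) =
  Rsup (fun r => exists z, r = eval X (upd a i (mt z (a k))) (bsups l body)).
Proof.
  intros Hl. apply bsups_ok_cons in Hl as (Hl & Hi & Hk). simpl in Hi, Hk.
  simpl bsups. rewrite BSup_eval; auto.
  - simpl. lia.
  - intros y Hy Hb. simpl in Hy. subst. apply bsups_bound_in in Hb; auto. lia.
Qed.

Definition bsups_variant (l : list (nat * nat)) (a a' : nat -> X) : Prop :=
  (forall j, ~ In j (map fst l) -> a' j = a j) /\
  (forall ik, In ik l -> le (a' (fst ik)) (a (snd ik))).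

Lemma bsups_le (mt_le : forall y c : X, le (mt y c) c) l c (a : nat -> X) :
  bsups_ok K l -> NoDup (map fst l) ->
  (forall a', bsups_variant l a a' -> eval X a' body <= c) ->
  eval X a (bsups l body) <= c.
Proof.
  revert a. induction l as [|[i k] l IH]; intros a Hl Hnd H.
  - apply H. split; simpl; tauto.
  - rewrite bsups_cons_eval by auto.
    apply bsups_ok_cons in Hl as Hl'. simpl in Hl'. destruct Hl' as (Hl1 & Hi & Hk).
    simpl in Hnd. inversion Hnd as [|? ? Hni Hnd']; subst.
    apply Rsup_image_le; [exact (inhabits zr)|]. intros z. apply IH; auto.
    intros a' [H1 H2]. apply H. split.
    + intros j Hj. simpl in Hj. rewrite H1 by tauto. apply upd_neq. intros ->. tauto.
    + intros ik [<- | Hik]; simpl.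
      * rewrite H1, upd_eq by auto. apply mt_le.
      * pose proof (H2 ik Hik) as H3. rewrite upd_neq in H3; auto.
        destruct (Hl1 ik Hik). lia.
Qed.

Lemma bsups_ge l (a a' : nat -> X) :
  bsups_ok K l -> NoDup (map fst l) -> bsups_variant l a a' ->
  eval X a' body <= eval X a (bsups l body).
Proof.
  revert a. induction l as [|[i k] l IH]; intros a Hl Hnd [H1 H2].
  - simpl. replace a' with a; [lra|]. extensionality j. symmetry. apply H1. simpl. tauto.
  - rewrite bsups_cons_eval by auto.
    apply bsups_ok_cons in Hl as Hl'. simpl in Hl'. destruct Hl' as (Hl1 & Hi & Hk).
    simpl in Hnd. inversion Hnd as [|? ? Hni Hnd']; subst.
    eapply Rle_trans; [|apply (Rsup_eval_ge X _ X (fun z => upd a i (mt z (a k))) (a' i))].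
    pose proof (H2 (i, k) (or_introl eq_refl)) as H3. simpl in H3. unfold le in H3. rewrite H3.
    apply IH; auto. split.
    + intros j Hj. unfold upd. destruct (Nat.eqb_spec j i) as [-> |]; auto.
      apply H1. simpl. intros [E | E]; [congruence | tauto].
    + intros ik Hik. rewrite upd_neq by (destruct (Hl1 ik Hik); lia). apply H2. simpl. auto.
Qed.

End BoundedSups.

Arguments bsups_variant {X} l a a'.

(** * First-order definability *)

Fixpoint fo_vars_below (V : nat) (p : foformula) : Prop :=
  match p with
  | FOeq t1 t2 => vars_below V t1 /\ vars_below V t2
  | FOneg p => fo_vars_below V p
  | FOand p q => fo_vars_below V p /\ fo_vars_below V q
  | FOex n p => (n < V)%nat /\ fo_vars_below V p
  end.

Section Definability.

Variables (X : Lstruct) (V : nat).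

Lemma evalt_vars_below_ext t (a a' : nat -> X) :
  vars_below V t -> (forall j, (j < V)%nat -> a j = a' j) -> evalt X a t = evalt X a' t.
Proof. intros Ht H. apply evalt_ext. intros n Hn. eauto using vars_below_var. Qed.

Lemma holds_ext p : forall (a a' : nat -> X),
  fo_vars_below V p -> (forall j, (j < V)%nat -> a j = a' j) -> (holds X a p <-> holds X a' p).
Proof.
  induction p; intros a a' Hp H; simpl in *.
  - destruct Hp. now rewrite (evalt_vars_below_ext t1 a a'), (evalt_vars_below_ext t2 a a').
  - now rewrite (IHp a a').
  - destruct Hp. now rewrite (IHp1 a a'), (IHp2 a a').
  - destruct Hp as [Hn Hp].
    assert (Hupd : forall x j, (j < V)%nat -> upd a n x j = upd a' n x j)
      by (intros x j Hj; unfold upd; destruct (Nat.eqb j n); auto).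
    split; intros [x Hx]; exists x.
    + rewrite <- (IHp (upd a n x)); auto.
    + rewrite (IHp (upd a n x) (upd a' n x)); auto.
Qed.

Definition definable (Q : (nat -> X) -> Prop) : Prop :=
  exists p, fo_vars_below V p /\ forall a, holds X a p <-> Q a.

Lemma definable_agree Q (a a' : nat -> X) :
  definable Q -> (forall j, (j < V)%nat -> a j = a' j) -> (Q a <-> Q a').
Proof. intros [p [Hp HQ]] H. rewrite <- !HQ. now apply holds_ext. Qed.

Lemma definable_upd_above Q (a : nat -> X) k c :
  definable Q -> (V <= k)%nat -> (Q (upd a k c) <-> Q a).
Proof. intros HQ Hk. apply (definable_agree Q); auto. intros j Hj. apply upd_neq. lia. Qed.

Lemma definable_ext Q Q' : definable Q -> (forall a, Q a <-> Q' a) -> definable Q'.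
Proof. intros [p [Hp HQ]] H. exists p. split; auto. intros a. now rewrite HQ. Qed.

Lemma definable_eq t1 t2 :
  vars_below V t1 -> vars_below V t2 -> definable (fun a => evalt X a t1 = evalt X a t2).
Proof. intros. exists (FOeq t1 t2). simpl. split; auto. tauto. Qed.

Lemma definable_not Q : definable Q -> definable (fun a => ~ Q a).
Proof. intros [p [Hp HQ]]. exists (FOneg p). simpl. split; auto. intros a. now rewrite HQ. Qed.

Lemma definable_and Q Q' : definable Q -> definable Q' -> definable (fun a => Q a /\ Q' a).
Proof.
  intros [p [Hp HQ]] [q [Hq HQ']]. exists (FOand p q). simpl. split; auto.
  intros a. now rewrite HQ, HQ'.
Qed.

Lemma definable_or Q Q' : definable Q -> definable Q' -> definable (fun a => Q a \/ Q' a).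
Proof.
  intros H1 H2. apply definable_ext with (fun a => ~ (~ Q a /\ ~ Q' a)).
  - now apply definable_not, definable_and; apply definable_not.
  - intros a. tauto.
Qed.

Lemma definable_imp Q Q' : definable Q -> definable Q' -> definable (fun a => Q a -> Q' a).
Proof.
  intros H1 H2. apply definable_ext with (fun a => ~ Q a \/ Q' a).
  - apply definable_or; auto. now apply definable_not.
  - intros a. tauto.
Qed.

Lemma definable_ex n Q : (n < V)%nat -> definable Q -> definable (fun a => exists x, Q (upd a n x)).
Proof.
  intros Hn [p [Hp HQ]]. exists (FOex n p). simpl. split; auto.
  intros a. split; intros [x Hx]; exists x; apply HQ; auto.
Qed.

Lemma definable_all n Q : (n < V)%nat -> definable Q -> definable (fun a => forall x, Q (upd a n x)).
Proof.
  intros Hn H. apply definable_ext with (fun a => ~ exists x, ~ Q (upd a n x)).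
  - apply definable_not, (definable_ex n (fun a => ~ Q a)); auto. now apply definable_not.
  - intros a. split.
    + intros H1 x. apply NNPP. eauto.
    + intros H1 [x Hx]. auto.
Qed.

Lemma definable_const (P0 : Prop) : definable (fun _ => P0).
Proof.
  destruct (classic P0) as [H | H].
  - exists (FOeq TZero TZero). simpl. split; auto. tauto.
  - exists (FOneg (FOeq TZero TZero)). simpl. split; auto. tauto.
Qed.

Lemma definable_fin_ex (l : list R) (Q : R -> (nat -> X) -> Prop) :
  (forall u, definable (Q u)) -> definable (fun a => exists u, In u l /\ Q u a).
Proof.
  intros H. induction l as [|u l IH].
  - apply definable_ext with (fun _ => False); [apply definable_const|]. simpl. firstorder.
  - apply definable_ext with (fun a => Q u a \/ exists u', In u' l /\ Q u' a).
    + now apply definable_or.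
    + intros a. simpl. firstorder congruence.
Qed.

End Definability.

Lemma definable_mono (X : Lstruct) V V' Q : (V <= V')%nat -> definable X V Q -> definable X V' Q.
Proof.
  intros HV [p [Hp HQ]]. exists p. split; auto. clear HQ. revert Hp.
  induction p; simpl; intuition (eauto using vars_below_mono; lia).
Qed.

(** * Models of Peano arithmetic *)

Definition pa_le {P : Lstruct} (x y : P) : Prop := exists z, add x z = y.

Section PeanoModels.

Variables (P : Lstruct) (HP : PAmodel P).

Lemma PA_discrete (x y : P) : x <> y -> dst x y = 1.
Proof. apply HP. Qed.

Lemma PA_mt_jn_le (x y : P) : pa_le x y -> mt x y = x /\ jn x y = y.
Proof. apply HP. Qed.

Lemma PA_mt_jn_nle (x y : P) : ~ pa_le x y -> mt x y = y /\ jn x y = x.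
Proof. apply HP. Qed.

Lemma PA_succ_neq0 (x : P) : add x on <> zr.
Proof. apply HP. Qed.

Lemma PA_succ_inj (x y : P) : add x on = add y on -> x = y.
Proof. apply HP. Qed.

Lemma PA_add0 (x : P) : add x zr = x.
Proof. apply HP. Qed.

Lemma PA_addS (x y : P) : add x (add y on) = add (add x y) on.
Proof. apply HP. Qed.

Lemma PA_induction V Q n (a : nat -> P) :
  definable P V Q -> Q (upd a n zr) -> (forall x, Q (upd a n x) -> Q (upd a n (add x on))) ->
  forall x, Q (upd a n x).
Proof.
  intros [p [_ Hp]] H0 HS x. destruct HP as (_ & _ & _ & _ & _ & _ & _ & _ & _ & Hind).
  apply Hp, Hind; [now apply Hp|]. intros y Hy. apply Hp, HS, Hp, Hy.
Qed.

Lemma PA_induction_eq V t1 t2 n (a : nat -> P) :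
  vars_below V t1 -> vars_below V t2 ->
  evalt P (upd a n zr) t1 = evalt P (upd a n zr) t2 ->
  (forall x, evalt P (upd a n x) t1 = evalt P (upd a n x) t2 ->
        evalt P (upd a n (add x on)) t1 = evalt P (upd a n (add x on)) t2) ->
  forall x, evalt P (upd a n x) t1 = evalt P (upd a n x) t2.
Proof.
  intros H1 H2. apply (PA_induction V (fun a => evalt P a t1 = evalt P a t2)).
  now apply definable_eq.
Qed.

Lemma PA_add0l (x : P) : add zr x = x.
Proof.
  pose proof (PA_induction_eq 1 (TAdd TZero (TVar 0)) (TVar 0) 0 (fun _ => zr)) as H.
  unfold upd in H. simpl in H. apply H; try (repeat split; lia).
  - apply PA_add0.
  - intros y Hy. rewrite PA_addS. congruence.
Qed.

Lemma PA_addSl (x y : P) : add (add x on) y = add (add x y) on.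
Proof.
  pose proof (PA_induction_eq 2 (TAdd (TAdd (TVar 1) TOne) (TVar 0))
                (TAdd (TAdd (TVar 1) (TVar 0)) TOne) 0 (fun _ => x)) as H.
  unfold upd in H. simpl in H. apply H; try (repeat split; lia).
  - now rewrite !PA_add0.
  - intros z Hz. rewrite !PA_addS. congruence.
Qed.

Lemma PA_addC (x y : P) : add x y = add y x.
Proof.
  pose proof (PA_induction_eq 2 (TAdd (TVar 1) (TVar 0)) (TAdd (TVar 0) (TVar 1))
                0 (fun _ => x)) as H.
  unfold upd in H. simpl in H. apply H; try (repeat split; lia).
  - now rewrite PA_add0, PA_add0l.
  - intros z Hz. rewrite PA_addS, PA_addSl. congruence.
Qed.

Lemma PA_addA (x y z : P) : add (add x y) z = add x (add y z).
Proof.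
  pose proof (PA_induction_eq 3 (TAdd (TAdd (TVar 1) (TVar 2)) (TVar 0))
                (TAdd (TVar 1) (TAdd (TVar 2) (TVar 0))) 0
                (fun n => if Nat.eqb n 1 then x else y)) as H.
  unfold upd in H. simpl in H. apply H; try (repeat split; lia).
  - now rewrite !PA_add0.
  - intros w Hw. rewrite !PA_addS. congruence.
Qed.

Lemma PA_zero_or_succ (x : P) : x = zr \/ exists y, x = add y on.
Proof.
  pose (Q := fun a : nat -> P => a 0%nat = zr \/ exists y, a 0%nat = add y on).
  assert (HQ : definable P 2 Q).
  { apply definable_ext with (fun a => evalt P a (TVar 0) = evalt P a TZero \/
        exists y, evalt P (upd a 1 y) (TVar 0) = evalt P (upd a 1 y) (TAdd (TVar 1) TOne)).
    - apply definable_or; [apply definable_eq; simpl; lia|].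
      apply (definable_ex P 2 1 (fun a => evalt P a (TVar 0) = evalt P a (TAdd (TVar 1) TOne)));
        [lia|]. apply definable_eq; simpl; repeat split; lia.
    - intros a. unfold Q, upd. simpl. tauto. }
  pose proof (PA_induction 2 Q 0 (fun _ => zr) HQ) as H. unfold Q, upd in H. simpl in H.
  apply H; auto. intros w _. eauto.
Qed.

Lemma pa_le_refl (x : P) : pa_le x x.
Proof. exists zr. apply PA_add0. Qed.

Lemma pa_le_trans (x y z : P) : pa_le x y -> pa_le y z -> pa_le x z.
Proof. intros [u Hu] [v Hv]. exists (add u v). rewrite <- PA_addA. congruence. Qed.

Lemma pa_le_addr (x y : P) : pa_le x (add x y).
Proof. now exists y. Qed.

Lemma pa_le_addl (x y : P) : pa_le y (add x y).
Proof. exists x. apply PA_addC. Qed.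

Lemma pa_le_0 (y : P) : pa_le y zr -> y = zr.
Proof.
  intros [z Hz]. destruct (PA_zero_or_succ z) as [-> | [z' ->]].
  - now rewrite PA_add0 in Hz.
  - rewrite PA_addS in Hz. now apply PA_succ_neq0 in Hz.
Qed.

Lemma pa_le_succ_inv (y c : P) : pa_le y (add c on) -> pa_le y c \/ y = add c on.
Proof.
  intros [z Hz]. destruct (PA_zero_or_succ z) as [-> | [z' ->]].
  - rewrite PA_add0 in Hz. auto.
  - rewrite PA_addS in Hz. apply PA_succ_inj in Hz. left. now exists z'.
Qed.

Lemma pa_le_succ (y c : P) : pa_le y c -> pa_le y (add c on).
Proof. intros [z Hz]. exists (add z on). rewrite PA_addS. congruence. Qed.

Lemma le_iff_pa_le (x y : P) : le x y <-> pa_le x y.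
Proof.
  unfold le. split; [|now intros H; apply PA_mt_jn_le].
  intros H. destruct (classic (pa_le x y)) as [H1 | H1]; auto.
  apply PA_mt_jn_nle in H1 as [H1 _]. rewrite H1 in H. subst. apply pa_le_refl.
Qed.

Lemma PA_mt_le (y c : P) : le (mt y c) c.
Proof.
  apply le_iff_pa_le. destruct (classic (pa_le y c)) as [H | H].
  - now rewrite (proj1 (PA_mt_jn_le _ _ H)).
  - rewrite (proj1 (PA_mt_jn_nle _ _ H)). apply pa_le_refl.
Qed.

Lemma pa_le_jn (x y : P) : pa_le x (jn x y).
Proof.
  destruct (classic (pa_le x y)) as [H | H].
  - now rewrite (proj2 (PA_mt_jn_le _ _ H)).
  - rewrite (proj2 (PA_mt_jn_nle _ _ H)). apply pa_le_refl.
Qed.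

End PeanoModels.

Lemma definable_pa_le P V u w z : (u < V)%nat -> (w < V)%nat -> (z < V)%nat -> z <> u -> z <> w ->
  definable P V (fun a => pa_le (a u) (a w)).
Proof.
  intros. apply definable_ext with
    (fun a => exists x, evalt P (upd a z x) (TAdd (TVar u) (TVar z)) = evalt P (upd a z x) (TVar w)).
  - apply (definable_ex P V z (fun a => evalt P a (TAdd (TVar u) (TVar z)) = evalt P a (TVar w)));
      auto.
    apply definable_eq; simpl; repeat split; lia.
  - intros a. simpl. unfold pa_le. split; intros [x Hx]; exists x.
    + now rewrite upd_eq, !upd_neq in Hx.
    + now rewrite upd_eq, !upd_neq.
Qed.

(** * Formulas in models of Peano arithmetic take finitely many values *)

Lemma finite_set_max (l : list R) (S : R -> Prop) :
  (forall s, S s -> In s l) -> (exists r, S r) -> exists m, S m /\ forall s, S s -> s <= m.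
Proof.
  revert S. induction l as [|u l IH]; intros S HS [r Hr]; [destruct (HS r Hr)|].
  destruct (classic (exists r', S r' /\ r' <> u)) as [Hother | Hnone].
  - destruct (IH (fun s => S s /\ s <> u)) as [m [[Hm Hmu] Hmax]]; auto.
    { intros s [Hs Hsu]. destruct (HS s Hs); [congruence | auto]. }
    destruct (classic (S u /\ m < u)) as [[Hu Hmlt] | Hu].
    + exists u. split; auto. intros s Hs. destruct (Req_dec s u) as [-> | Hsu]; [lra|].
      specialize (Hmax s (conj Hs Hsu)). lra.
    + exists m. split; auto. intros s Hs. destruct (Req_dec s u) as [-> | Hsu]; auto.
      apply Rnot_lt_le. auto.
  - assert (r = u) as -> by (apply NNPP; eauto).
    exists u. split; auto. intros s Hs. destruct (Req_dec s u) as [-> | Hsu]; [lra|].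
    exfalso. eauto.
Qed.

Section AttainedSupInf.

Variables (T : Type) (HT : inhabited T) (F : T -> R) (l : list R).
Hypothesis F_in : forall x, In (F x) l.

Lemma Rsup_image_attained : exists x0, Rsup (fun r => exists x, r = F x) = F x0.
Proof.
  destruct HT as [t]. destruct (finite_set_max l (fun r => exists x, r = F x)) as [m [[x0 ->] Hm]].
  - intros s [x ->]. auto.
  - now exists (F t), t.
  - exists x0. assert (Hmax : forall x, F x <= F x0) by (intros x; apply Hm; eauto).
    apply Rle_antisym; [apply Rsup_image_le | apply (Rsup_image_ge _ _ (F x0))]; auto.
Qed.

Lemma Rinf_image_attained : exists x0, Rinf (fun r => exists x, r = F x) = F x0.
Proof.
  destruct HT as [t].
  destruct (finite_set_max (map Ropp l) (fun s => exists x, - s = F x)) as [m [[x0 Hx0] Hm]].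
  - intros s [x Hx]. replace s with (- F x) by lra. now apply in_map.
  - exists (- F t). exists t. lra.
  - exists x0. assert (Hmin : forall x, F x0 <= F x).
    { intros x. specialize (Hm (- F x)). enough (- F x <= m) by lra. apply Hm. exists x. lra. }
    apply Rle_antisym; [apply (Rinf_image_le _ _ (F x0)) | apply Rinf_image_ge]; auto.
Qed.

End AttainedSupInf.

Fixpoint values (p : formula) : list R :=
  match p with
  | FOne => 1 :: nil
  | FDist _ _ => 0 :: 1 :: nil
  | FAdd p q => flat_map (fun u => map (fun w => u + w) (values q)) (values p)
  | FScale r p => map (fun u => r * u) (values p)
  | FSup _ p | FInf _ p => values p
  end.

Section PeanoValues.

Variables (P : Lstruct) (HP : PAmodel P).

Lemma PA_dst_cases (x y : P) : (x = y /\ dst x y = 0) \/ (x <> y /\ dst x y = 1).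
Proof.
  destruct (classic (x = y)) as [-> | H].
  - left. split; auto. apply dst_refl.
  - right. split; auto. now apply PA_discrete.
Qed.

Lemma PA_eval_in_values p : forall a, In (eval P a p) (values p).
Proof.
  induction p; intros a; simpl.
  - auto.
  - destruct (PA_dst_cases (evalt P a t1) (evalt P a t2)) as [[_ ->] | [_ ->]]; simpl; auto.
  - apply in_flat_map. exists (eval P a p1). split; auto. now apply in_map.
  - now apply in_map.
  - destruct (Rsup_image_attained P (inhabits zr) (fun x => eval P (upd a n x) p) (values p))
      as [x0 ->]; auto.
  - destruct (Rinf_image_attained P (inhabits zr) (fun x => eval P (upd a n x) p) (values p))
      as [x0 ->]; auto.
Qed.

Lemma PA_FSup_attained a n p : exists x, eval P (upd a n x) p = eval P a (FSup n p).
Proof.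
  destruct (Rsup_image_attained P (inhabits zr) (fun x => eval P (upd a n x) p) (values p))
    as [x0 Hx0]; [intros; apply PA_eval_in_values|].
  exists x0. simpl. auto.
Qed.

Lemma definable_eval_pred V p (Rel : R -> Prop) :
  (forall u, definable P V (fun a => eval P a p = u)) -> definable P V (fun a => Rel (eval P a p)).
Proof.
  intros Hp.
  apply definable_ext with (fun a => exists u, In u (values p) /\ (eval P a p = u /\ Rel u)).
  - apply (definable_fin_ex P V (values p) (fun u a => eval P a p = u /\ Rel u)).
    intros u. apply definable_and; auto using definable_const.
  - intros a. split; [intros (u & _ & -> & H); auto|].
    intros H. exists (eval P a p). auto using PA_eval_in_values.
Qed.

Lemma definable_eval V p : sup_form V p -> forall v, definable P V (fun a => eval P a p = v).
Proof.
  induction p; simpl; intros Hp v; try tauto.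
  - apply definable_const.
  - destruct Hp as [H1 H2].
    apply definable_ext with (fun a => (evalt P a t1 = evalt P a t2 /\ v = 0) \/
                                      (~ evalt P a t1 = evalt P a t2 /\ v = 1)).
    + apply definable_or; apply definable_and; try apply definable_not;
        auto using definable_eq, definable_const.
    + intros a. destruct (PA_dst_cases (evalt P a t1) (evalt P a t2)) as [[E ->] | [E ->]].
      * split; [intros [[_ ?] | [? _]]; [lra | tauto] | intros <-; left; auto].
      * split; [intros [[? _] | [_ ?]]; [tauto | lra] | intros <-; right; auto].
  - destruct Hp as [H1 H2].
    apply definable_ext with
      (fun a => exists u, In u (values p1) /\ (eval P a p1 = u /\ eval P a p2 = v - u)).
    + apply (definable_fin_ex P V (values p1) (fun u a => eval P a p1 = u /\ eval P a p2 = v - u)).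
      intros u. apply definable_and; auto.
    + intros a. split; [intros (u & _ & H3 & H4); lra|].
      intros H. exists (eval P a p1). repeat split; [apply PA_eval_in_values | lra].
  - apply (definable_eval_pred V p (fun w => r * w = v)); auto.
  - destruct Hp as [Hn Hp].
    apply definable_ext with (fun a => (exists x, eval P (upd a n x) p = v) /\
                                      forall x, eval P (upd a n x) p <= v).
    + apply definable_and.
      * apply (definable_ex P V n (fun a => eval P a p = v)); auto.
      * apply (definable_all P V n (fun a => eval P a p <= v)); auto.
        apply (definable_eval_pred V p (fun w => w <= v)); auto.
    + intros a. change (Rsup _) with (eval P a (FSup n p)). split.
      * intros [[x Hx] Hle]. apply Rle_antisym; [now apply eval_FSup_le|].
        rewrite <- Hx. apply eval_FSup_ge.
      * intros H. split.
        -- destruct (PA_FSup_attained a n p) as [x Hx]. exists x. congruence.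
        -- intros x. rewrite <- H. apply eval_FSup_ge.
Qed.

End PeanoValues.

(** * Collection in models of Peano arithmetic *)

Section Collection.

Variables (P : Lstruct) (HP : PAmodel P).

Definition collection_at (Q : P -> P -> Prop) (c : P) : Prop :=
  (forall y, pa_le y c -> exists x, Q y x) ->
  exists B, forall y, pa_le y c -> exists x, pa_le x B /\ Q y x.

Lemma collection_at_iff Q Q' c :
  (forall y x, Q y x <-> Q' y x) -> collection_at Q c -> collection_at Q' c.
Proof.
  intros H HQ Hall. destruct HQ as [B HB].
  - intros y Hy. destruct (Hall y Hy) as [x Hx]. exists x. now apply H.
  - exists B. intros y Hy. destruct (HB y Hy) as [x [Hx1 Hx2]]. exists x. split; auto. now apply H.
Qed.

Lemma collection_at_zero Q : collection_at Q zr.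
Proof.
  intros Hall. destruct (Hall zr (pa_le_refl P HP zr)) as [x Hx]. exists x.
  intros y Hy. apply pa_le_0 in Hy as ->; auto. exists x. split; auto. apply pa_le_refl; auto.
Qed.

Lemma collection_at_succ Q c : collection_at Q c -> collection_at Q (add c on).
Proof.
  intros IH Hall. destruct IH as [B HB]; [intros y Hy; apply Hall, pa_le_succ; auto|].
  destruct (Hall (add c on) (pa_le_refl P HP _)) as [x1 Hx1].
  exists (add B x1). intros y Hy. apply pa_le_succ_inv in Hy as [Hy | ->]; auto.
  - destruct (HB y Hy) as [x [Hx Hq]]. exists x. split; auto.
    apply pa_le_trans with B; auto. apply pa_le_addr.
  - exists x1. split; auto. apply pa_le_addl; auto.
Qed.

Lemma definable_drop_above V Q (a : nat -> P) k c v x :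
  definable P V Q -> (V <= k)%nat -> (v < V)%nat ->
  (Q (upd (upd a k c) v x) <-> Q (upd a v x)).
Proof.
  intros HQ Hk Hv. rewrite upd_comm by lia. now apply (definable_upd_above P V).
Qed.

(* Variables: the bound [c] sits at [V], the collecting bound at [S V], and [S (S V)] is
   scratch space for defining [pa_le]. *)
Lemma definable_collection_at V Q i v :
  definable P V Q -> (i < V)%nat -> (v < V)%nat -> i <> v ->
  definable P (V + 3) (fun a => collection_at (fun y x => Q (upd (upd a i y) v x)) (a V)).
Proof.
  intros HQ Hi Hv Hiv.
  assert (HQ3 : definable P (V + 3) Q) by (apply definable_mono with V; auto; lia).
  assert (HiV : forall (a : nat -> P) y, upd a i y V = a V) by (intros; apply upd_neq; lia).
  apply definable_imp.
  - apply definable_ext with (fun a => forall y,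
      (fun a1 => pa_le (a1 i) (a1 V) -> exists x, Q (upd a1 v x)) (upd a i y)).
    + apply (definable_all P (V + 3) i
               (fun a1 => pa_le (a1 i) (a1 V) -> exists x, Q (upd a1 v x))); [lia|].
      apply definable_imp.
      * apply (definable_pa_le P (V + 3) i V (S (S V))); lia.
      * apply (definable_ex P (V + 3) v Q); [lia | auto].
    + intros a. simpl. setoid_rewrite HiV. setoid_rewrite upd_eq. tauto.
  - apply definable_ext with (fun a => exists B, (fun a2 => forall y, (fun a1 =>
      pa_le (a1 i) (a1 V) -> exists x, (fun a3 => pa_le (a3 v) (a3 (S V)) /\ Q a3) (upd a1 v x))
      (upd a2 i y)) (upd a (S V) B)).
    + apply (definable_ex P (V + 3) (S V) (fun a2 => forall y, (fun a1 =>
        pa_le (a1 i) (a1 V) -> exists x, (fun a3 => pa_le (a3 v) (a3 (S V)) /\ Q a3) (upd a1 v x))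
        (upd a2 i y))); [lia|].
      apply (definable_all P (V + 3) i (fun a1 =>
        pa_le (a1 i) (a1 V) -> exists x, (fun a3 => pa_le (a3 v) (a3 (S V)) /\ Q a3) (upd a1 v x)));
        [lia|].
      apply definable_imp.
      * apply (definable_pa_le P (V + 3) i V (S (S V))); lia.
      * apply (definable_ex P (V + 3) v (fun a3 => pa_le (a3 v) (a3 (S V)) /\ Q a3)); [lia|].
        apply definable_and; auto. apply (definable_pa_le P (V + 3) v (S V) (S (S V))); lia.
    + intros a. simpl.
      assert (Hdrop : forall B y x, Q (upd (upd (upd a (S V) B) i y) v x) <-> Q (upd (upd a i y) v x)).
      { intros B y x. rewrite (upd_comm a (S V) i) by lia.
        apply (definable_drop_above V); auto; lia. }
      split; intros [B HB]; exists B; intros y.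
      * intros Hy. destruct (HB y) as [x [Hx1 Hx2]]; [now simpl_upd|].
        exists x. simpl_upd_in Hx1. split; auto. now apply (Hdrop B y x).
      * simpl_upd. intros Hy. destruct (HB y Hy) as [x [Hx1 Hx2]].
        exists x. simpl_upd. split; auto. now apply (Hdrop B y x).
Qed.

Lemma PA_collection1 V Q i v (a : nat -> P) b :
  definable P V Q -> (i < V)%nat -> (v < V)%nat -> i <> v ->
  collection_at (fun y x => Q (upd (upd a i y) v x)) b.
Proof.
  intros HQ Hi Hv Hiv.
  assert (Hdrop : forall c y x, Q (upd (upd (upd a V c) i y) v x) <-> Q (upd (upd a i y) v x)).
  { intros c y x. rewrite (upd_comm a V i) by lia. apply (definable_drop_above V); auto. }
  pose (C := fun a0 : nat -> P => collection_at (fun y x => Q (upd (upd a0 i y) v x)) (a0 V)).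
  assert (Hind : forall c, C (upd a V c)).
  { apply (PA_induction P HP (V + 3)); [now apply definable_collection_at | |]; unfold C.
    - rewrite upd_eq. apply collection_at_zero.
    - intros c IH. rewrite upd_eq in *.
      apply (collection_at_iff (fun y x => Q (upd (upd a i y) v x))); [intros; now rewrite Hdrop|].
      apply collection_at_succ.
      eapply collection_at_iff; [|exact IH]. intros; apply Hdrop. }
  specialize (Hind b). unfold C in Hind. rewrite upd_eq in Hind.
  eapply collection_at_iff; [|exact Hind]. intros; apply Hdrop.
Qed.

Definition pa_variant (L : list nat) (b : P) (a a' : nat -> P) : Prop :=
  (forall j, ~ In j L -> a' j = a j) /\ (forall j, In j L -> pa_le (a' j) b).

Lemma pa_variant_nil b a a' : pa_variant nil b a a' <-> a' = a.
Proof.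
  split.
  - intros [H _]. extensionality j. auto.
  - intros ->. split; simpl; tauto.
Qed.

Lemma pa_variant_cons i L b a a' :
  pa_variant (i :: L) b a a' <-> exists y, pa_le y b /\ pa_variant L b (upd a i y) a'.
Proof.
  unfold pa_variant. split.
  - intros [H1 H2]. exists (a' i). split; [apply H2; simpl; auto|]. split.
    + intros j Hj. unfold upd. destruct (Nat.eqb_spec j i) as [-> |]; auto.
      apply H1. simpl. intros [E | E]; [congruence | auto].
    + intros j Hj. apply H2. simpl. auto.
  - intros (y & Hy & G1 & G2). split.
    + intros j Hj. simpl in Hj. rewrite G1 by tauto. apply upd_neq. intros ->. tauto.
    + intros j [<- | Hj]; auto.
      destruct (in_dec Nat.eq_dec i L); auto. now rewrite G1, upd_eq.
Qed.

Lemma pa_variant_upd_out L b a a' k c :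
  ~ In k L -> pa_variant L b a a' -> pa_variant L b (upd a k c) (upd a' k c).
Proof.
  intros Hk [H1 H2]. split.
  - intros j Hj. unfold upd. destruct (Nat.eqb j k); auto.
  - intros j Hj. rewrite upd_neq by (intros ->; tauto). auto.
Qed.

Lemma definable_forall_pa_variant W V L (Phi : (nat -> P) -> Prop) :
  definable P W Phi -> (S (S V) < W)%nat -> (forall j, In j L -> (j < V)%nat) ->
  definable P W (fun a => forall a', pa_variant L (a V) a a' -> Phi a').
Proof.
  intros HPhi HW HL. induction L as [|i L IH].
  - apply definable_ext with Phi; auto. intros a. split.
    + intros H a' Ha'. apply pa_variant_nil in Ha' as ->. auto.
    + intros H. apply H, pa_variant_nil. reflexivity.
  - assert (Hi : (i < V)%nat) by (apply HL; simpl; auto).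
    apply definable_ext with (fun a => forall y, (fun a1 => pa_le (a1 i) (a1 V) ->
                              forall a', pa_variant L (a1 V) a1 a' -> Phi a') (upd a i y)).
    + apply (definable_all P W i (fun a1 => pa_le (a1 i) (a1 V) ->
               forall a', pa_variant L (a1 V) a1 a' -> Phi a')); [lia|].
      apply definable_imp.
      * apply (definable_pa_le P W i V (S (S V))); lia.
      * apply IH. intros j Hj. apply HL. simpl. auto.
    + intros a. assert (HiV : forall y, upd a i y V = a V) by (intros; apply upd_neq; lia).
      setoid_rewrite HiV. setoid_rewrite upd_eq. split.
      * intros H a' Ha'. apply pa_variant_cons in Ha' as (y & Hy & Ha'). now apply (H y).
      * intros H y Hy a' Ha'. apply H, pa_variant_cons. eauto.
Qed.

Lemma definable_bounded_witness V Q v L :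
  definable P V Q -> (v < V)%nat -> (forall j, In j L -> (j < V)%nat) ->
  definable P (V + 3) (fun a => forall a', pa_variant L (a V) a a' ->
                                exists x, pa_le x (a' (S V)) /\ Q (upd a' v x)).
Proof.
  intros HQ Hv HL. apply definable_forall_pa_variant; auto; [|lia].
  apply definable_ext with
    (fun a' => exists x, (fun a3 => pa_le (a3 v) (a3 (S V)) /\ Q a3) (upd a' v x)).
  - apply (definable_ex P (V + 3) v (fun a3 => pa_le (a3 v) (a3 (S V)) /\ Q a3)); [lia|].
    apply definable_and.
    + apply (definable_pa_le P (V + 3) v (S V) (S (S V))); lia.
    + apply definable_mono with V; auto. lia.
  - intros a'. simpl. now setoid_rewrite upd_eq; setoid_rewrite (upd_neq a' v _ (S V)); [|lia].
Qed.

Lemma PA_collection V Q v L (a : nat -> P) :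
  definable P V Q -> (v < V)%nat -> (forall j, In j L -> (j < V)%nat /\ j <> v) ->
  (forall a', pa_variant L (a V) a a' -> exists x, Q (upd a' v x)) ->
  exists B, forall a', pa_variant L (a V) a a' -> exists x, pa_le x B /\ Q (upd a' v x).
Proof.
  intros HQ Hv. revert a. induction L as [|i L IH]; intros a HL H.
  - destruct (H a) as [x Hx]; [now apply pa_variant_nil|]. exists x.
    intros a' Ha'. apply pa_variant_nil in Ha' as ->. exists x. split; auto. apply pa_le_refl; auto.
  - assert (Hi : (i < V)%nat /\ i <> v) by (apply HL; simpl; auto).
    assert (HL' : forall j, In j L -> (j < V)%nat /\ j <> v) by (intros; apply HL; simpl; auto).
    assert (HSV : ~ In (S V) L) by (intros Hin; apply HL' in Hin; lia).
    assert (Hdrop : forall a' c x, Q (upd (upd a' (S V) c) v x) <-> Q (upd a' v x))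
      by (intros; apply (definable_drop_above V); auto).
    pose (Q1 := fun a0 : nat -> P => forall a', pa_variant L (a0 V) a0 a' ->
                  exists x, pa_le x (a' (S V)) /\ Q (upd a' v x)).
    assert (HQ1 : definable P (V + 3) Q1)
      by (apply definable_bounded_witness; auto; intros j Hj; apply HL'; auto).
    destruct (PA_collection1 (V + 3) Q1 i (S V) a (a V) HQ1) as [Bs HBs]; try lia.
    + intros y Hy.
      destruct (IH (upd a i y) HL') as [By HBy].
      { intros a' Ha'. apply H, pa_variant_cons. rewrite upd_neq in Ha' by lia. eauto. }
      exists By. intros a' Ha'. rewrite !upd_neq in Ha' by lia.
      assert (HaSV : a' (S V) = By) by (destruct Ha' as [H1 _]; now rewrite H1, upd_eq).
      rewrite HaSV. rewrite upd_neq in HBy by lia.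
      destruct (HBy (upd a' (S V) (upd a i y (S V)))) as [x [Hx1 Hx2]].
      { pose proof (pa_variant_upd_out _ _ _ _ (S V) (upd a i y (S V)) HSV Ha') as Hv'.
        now rewrite upd_shadow, upd_id in Hv'. }
      exists x. split; auto. now apply Hdrop in Hx2.
    + exists Bs. intros a' Ha'.
      apply pa_variant_cons in Ha' as Hcons. destruct Hcons as (y & Hy & Ha'L).
      destruct (HBs y Hy) as [B [HB1 HB2]].
      destruct (HB2 (upd a' (S V) B)) as [x [Hx1 Hx2]].
      { rewrite !upd_neq by lia. now apply pa_variant_upd_out. }
      exists x. rewrite upd_eq in Hx1. split; [apply pa_le_trans with B; auto|].
      now apply Hdrop in Hx2.
Qed.

End Collection.

(** * The collection condition *)

Definition others (K n : nat) : list nat := filter (fun i => negb (Nat.eqb i n)) (seq 0 K).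

Lemma In_others K n m : In m (others K n) <-> (m < K)%nat /\ m <> n.
Proof.
  unfold others. rewrite filter_In, in_seq.
  destruct (Nat.eqb_spec m n); simpl; intuition (try lia; try congruence).
Qed.

Lemma NoDup_others K n : NoDup (others K n).
Proof. apply NoDup_filter, seq_NoDup. Qed.

Definition collection_pairs (K n : nat) : list (nat * nat) := map (fun i => (i, K)) (others K n).

Lemma bsups_ok_collection_pairs K n : bsups_ok K (collection_pairs K n).
Proof.
  intros ik Hik. apply in_map_iff in Hik as [i [<- Hi]]. apply In_others in Hi. simpl. lia.
Qed.

Lemma map_fst_collection_pairs K n : map fst (collection_pairs K n) = others K n.
Proof. unfold collection_pairs. rewrite map_map. apply map_id. Qed.

Definition collection_body (K n : nat) (p : formula) : formula :=
  FAdd (FSup n p) (FScale (-1) (BSup n (TJoin (TVar (S K)) (TVar K)) p)).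

(* sup_b inf_B sup_{x_i <= b, i <> n} (sup_y p - sup_{y <= B \/ b} p) <= 0, with [b] the variable
   [K] and [B] the variable [S K]. *)
Definition collection_condition (K n : nat) (p : formula) :=
  Cond (FSup K (FInf (S K) (bsups (collection_pairs K n) (collection_body K n p))))
       (FScale 0 FOne).

Definition collects {X : Lstruct} (K n : nat) (p : formula) (b B : X) (e : R) : Prop :=
  forall g : nat -> X, bounded_except K n b g ->
    eval X g (FSup n p) <= Rsup (fun r => exists y, r = eval X (upd g n (mt y B)) p) + e.

Section CollectionCondition.

Variables (K n : nat) (p : formula).
Hypotheses (Hp : sup_form K p) (Hn : (n < K)%nat).

Lemma collection_body_bound_in y : bound_in y (collection_body K n p) -> (y < K)%nat.
Proof.
  simpl. unfold BSup. simpl. rewrite bound_in_fsubst.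
  intros [[-> | H] | [-> | H]]; eauto using sup_form_bound_in.
Qed.

Lemma collection_body_eval (X : Lstruct) (a : nat -> X) :
  eval X a (collection_body K n p) =
  eval X a (FSup n p) - Rsup (fun r => exists y, r = eval X (upd a n (mt y (jn (a (S K)) (a K)))) p).
Proof.
  change (eval X a (collection_body K n p)) with
    (eval X a (FSup n p) + -1 * eval X a (BSup n (TJoin (TVar (S K)) (TVar K)) p)).
  rewrite BSup_eval.
  - simpl. lra.
  - simpl. lia.
  - intros z Hz Hb. apply (sup_form_bound_in K p z Hp) in Hb. simpl in Hz. lia.
Qed.

Lemma collection_condition_closed : closed_condition (collection_condition K n p).
Proof.
  split; intros m Hm; simpl in Hm; [|tauto].
  destruct Hm as (HmK & HmSK & Hm).
  apply (free_in_bsups (collection_body K n p)) in Hm as [[Hm Hfst] | [ik [Hik ->]]].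
  - rewrite map_fst_collection_pairs, In_others in Hfst. simpl in Hm. unfold BSup in Hm.
    simpl in Hm. destruct Hm as [[Hmn Hm] | [Hmn Hm]].
    + apply Hfst. split; eauto using sup_form_free_in.
    + apply free_in_fsubst in Hm as [[Hm _] | Hm].
      * apply Hfst. split; eauto using sup_form_free_in.
      * simpl in Hm. lia.
  - apply in_map_iff in Hik as [i [<- _]]. simpl in HmK. lia.
Qed.

Lemma PA_collection_witness (P : Lstruct) (HP : PAmodel P) (b : P) :
  exists B0, forall g : nat -> P, bounded_except K n b g ->
    exists x, pa_le x B0 /\ eval P (upd g n x) p = eval P g (FSup n p).
Proof.
  set (a1 := upd (fun _ => zr) K b).
  set (Q := fun a0 : nat -> P => eval P a0 p = eval P a0 (FSup n p)).
  assert (HQ : definable P K Q).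
  { apply definable_ext with
      (fun a0 => exists u, In u (values p) /\ (eval P a0 p = u /\ eval P a0 (FSup n p) = u)).
    - apply (definable_fin_ex P K (values p)). intros u.
      apply definable_and; apply definable_eval; simpl; auto.
    - intros a0. unfold Q. split; [intros (u & _ & H1 & H2); congruence|].
      intros H. exists (eval P a0 p). auto using PA_eval_in_values. }
  destruct (PA_collection P HP K Q n (others K n) a1 HQ Hn) as [B0 HB0].
  { intros j Hj. now apply In_others. }
  { intros a' _. destruct (PA_FSup_attained P HP a' n p) as [x Hx]. exists x.
    unfold Q. now rewrite eval_FSup_upd. }
  exists B0. intros g Hg.
  destruct (HB0 (merge K (upd g n (a1 n)) a1)) as [x [Hx HQx]].
  { split.
    - intros j Hj. rewrite In_others in Hj.
      destruct (Nat.lt_ge_cases j K); [|now apply merge_ge].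
      rewrite merge_lt by auto. assert (j = n) as -> by tauto. apply upd_eq.
    - intros j Hj. apply In_others in Hj as [HjK Hjn].
      rewrite merge_lt, upd_neq by auto. unfold a1. rewrite upd_eq.
      apply le_iff_pa_le; auto. }
  exists x. split; auto. unfold Q in HQx. rewrite eval_FSup_upd in HQx.
  rewrite <- merge_upd in HQx by auto. rewrite upd_shadow in HQx.
  rewrite !eval_merge_sup_form in HQx by (simpl; auto).
  now rewrite eval_FSup_upd in HQx.
Qed.

Lemma PA_collection_condition (P : Lstruct) (a : nat -> P) :
  PAmodel P -> sat P a (collection_condition K n p).
Proof.
  intros HP. unfold sat. simpl lhs. simpl rhs.
  replace (eval P a (FScale 0 FOne)) with 0 by (simpl; ring).
  apply eval_FSup_le. intros b. destruct (PA_collection_witness P HP b) as [B0 HB0].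
  eapply Rle_trans; [apply (eval_FInf_le P _ _ _ B0)|].
  apply (bsups_le K (collection_body K n p) collection_body_bound_in P (PA_mt_le P HP)).
  { apply bsups_ok_collection_pairs. }
  { rewrite map_fst_collection_pairs. apply NoDup_others. }
  intros a' [Hout Hin]. rewrite map_fst_collection_pairs in Hout.
  assert (HaK : a' K = b) by (rewrite Hout by (rewrite In_others; lia); now simpl_upd).
  assert (HaSK : a' (S K) = B0) by (rewrite Hout by (rewrite In_others; lia); now simpl_upd).
  destruct (HB0 a') as [x [Hx Hsup]].
  { intros i Hi Hin'. specialize (Hin (i, K)). simpl in Hin. simpl_upd_in Hin.
    apply Hin, in_map_iff. exists i. split; auto. now apply In_others. }
  rewrite collection_body_eval, HaK, HaSK, <- Hsup.
  assert (Hmt : mt x (jn B0 b) = x).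
  { apply PA_mt_jn_le; auto. apply pa_le_trans with B0; auto. apply pa_le_jn; auto. }
  pose proof (Rsup_eval_ge P p P (fun y => upd a' n (mt y (jn B0 b))) x) as Hge.
  simpl in Hge. rewrite Hmt in Hge. lra.
Qed.

Lemma AA_collection_condition : AA (collection_condition K n p).
Proof.
  split; [apply collection_condition_closed|]. intros P a HP. now apply PA_collection_condition.
Qed.

Lemma models_AA_collects (M : Lstruct) (b : M) e :
  models_AA M -> lattice_laws M -> 0 < e -> exists B, le b B /\ collects K n p b B e.
Proof.
  intros HM HL He.
  pose proof (HM _ AA_collection_condition (fun _ => zr)) as Hsat.
  unfold sat in Hsat. simpl lhs in Hsat. simpl rhs in Hsat.
  replace (eval M _ (FScale 0 FOne)) with 0 in Hsat by (simpl; ring).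
  set (body := bsups (collection_pairs K n) (collection_body K n p)) in Hsat.
  set (a1 := upd (fun _ : nat => (zr : M)) K b).
  assert (Hinf : eval M a1 (FInf (S K) body) <= 0)
    by (eapply Rle_trans; [apply (eval_FSup_ge M _ K) | exact Hsat]).
  destruct (Rinf_image_lt M (fun B => eval M (upd a1 (S K) B) body) (- fbound body) e)
    as [B0 HB0]; [exact (inhabits zr) | intros; apply eval_ge_fbound | simpl in Hinf; lra |].
  exists (jn B0 b). split; [now apply le_jn_r|]. intros g Hg.
  set (a' := merge K (upd g n (a1 n)) (upd a1 (S K) B0)).
  assert (Hbody : eval M a' (collection_body K n p) <= eval M (upd a1 (S K) B0) body).
  { apply (bsups_ge K (collection_body K n p) collection_body_bound_in M).
    - apply bsups_ok_collection_pairs.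
    - rewrite map_fst_collection_pairs. apply NoDup_others.
    - split.
      + intros j Hj. rewrite map_fst_collection_pairs, In_others in Hj. unfold a'.
        destruct (Nat.lt_ge_cases j K); [|now apply merge_ge].
        rewrite merge_lt by auto. assert (j = n) as -> by tauto. rewrite upd_eq.
        unfold a1. now simpl_upd.
      + intros ik Hik. apply in_map_iff in Hik as [i [<- Hi]]. apply In_others in Hi as [HiK Hin].
        simpl. unfold a', a1. rewrite merge_lt, upd_neq by auto. simpl_upd. auto. }
  rewrite collection_body_eval in Hbody.
  assert (Ha'K : a' K = b) by (unfold a', a1; rewrite merge_ge by lia; now simpl_upd).
  assert (Ha'SK : a' (S K) = B0) by (unfold a', a1; rewrite merge_ge by lia; now simpl_upd).
  assert (Hagree : forall y, eval M (upd a' n y) p = eval M (upd g n y) p).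
  { intros y. unfold a'. rewrite <- merge_upd, upd_shadow by auto. now apply eval_merge_sup_form. }
  rewrite Ha'K, Ha'SK in Hbody.
  rewrite (Rsup_image_ext _ (fun y => eval M (upd g n (mt y (jn B0 b))) p)) in Hbody
    by (intros; apply Hagree).
  assert (Hsup : eval M a' (FSup n p) = eval M g (FSup n p))
    by (simpl; apply Rsup_image_ext; intros; apply Hagree).
  rewrite Hsup in Hbody. lra.
Qed.

End CollectionCondition.

(** * Approximating sup-formulas by Sigma_0 formulas *)

Lemma Req_of_close (x y : R) : (forall e, 0 < e -> Rabs (x - y) <= e) -> x = y.
Proof.
  intros H. destruct (Req_dec x y) as [E | E]; auto.
  assert (Hpos : 0 < Rabs (x - y)) by (apply Rabs_pos_lt; lra).
  specialize (H (Rabs (x - y) / 2) ltac:(lra)). lra.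
Qed.

Definition split_at {A : Type} (m : nat) (h1 h2 : nat -> A) : nat -> A :=
  fun j => if Nat.ltb j m then h1 j else h2 j.

Lemma comp_split_at {A B : Type} (f : A -> B) m (h1 h2 : nat -> A) :
  (fun j => f (split_at m h1 h2 j)) = split_at m (fun j => f (h1 j)) (fun j => f (h2 j)).
Proof. extensionality j. unfold split_at. now destruct (Nat.ltb j m). Qed.

Definition approximates {X : Lstruct} (K o : nat) (p : formula) (b : X) (h : nat -> X) (e : R) :=
  forall g, bounded K b g -> Rabs (eval X (merge K g h) (bound_sups K o p) - eval X g p) <= e.

Section Approximates.

Variables (X : Lstruct) (K : nat).

Lemma approximates_weaken o p (b : X) h e e' :
  e <= e' -> approximates K o p b h e -> approximates K o p b h e'.
Proof. intros He H g Hg. specialize (H g Hg). lra. Qed.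

Lemma approximates_bound_sups_id o p (b : X) h :
  sup_form K p -> bound_sups K o p = p -> approximates K o p b h 0.
Proof.
  intros Hp Hb g _. rewrite Hb, eval_merge_sup_form by auto. rewrite Rminus_diag, Rabs_R0. lra.
Qed.

Lemma approximates_FAdd o p q (b : X) h1 h2 e1 e2 :
  sup_form K p -> sup_form K q ->
  approximates K o p b h1 e1 -> approximates K (o + fsize p) q b h2 e2 ->
  approximates K o (FAdd p q) b (split_at (K + (o + fsize p)) h1 h2) (e1 + e2).
Proof.
  intros Hp Hq H1 H2 g Hg. simpl bound_sups. simpl eval.
  rewrite (bound_sups_merge_ext X K o p g _ h1), (bound_sups_merge_ext X K _ q g _ h2); auto.
  - specialize (H1 g Hg). specialize (H2 g Hg).
    eapply Rle_trans; [|apply Rplus_le_compat; [exact H1 | exact H2]].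
    eapply Rle_trans; [|apply Rabs_triang]. right. f_equal. ring.
  - intros j Hj. unfold split_at. destruct (Nat.ltb_spec (K + j) (K + (o + fsize p))); auto; lia.
  - intros j Hj. unfold split_at. destruct (Nat.ltb_spec (K + j) (K + (o + fsize p))); auto; lia.
Qed.

Lemma approximates_FScale o r p (b : X) h e :
  approximates K o p b h e -> approximates K o (FScale r p) b h (Rabs r * e).
Proof.
  intros H g Hg. simpl. rewrite <- Rmult_minus_distr_l, Rabs_mult.
  apply Rmult_le_compat_l; [apply Rabs_pos | auto].
Qed.

Lemma approximates_FSup (HL : lattice_laws X) o n p (b B : X) h e e' :
  sup_form K (FSup n p) -> le b B ->
  approximates K (S o) p B h e -> collects K n p b B e' ->
  approximates K o (FSup n p) b (upd h (K + o) B) (e + e').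
Proof.
  intros Hp HbB Hh Hcoll g Hg. rewrite bound_sups_FSup_merge_eval by auto.
  assert (Hclose : forall y, Rabs (eval X (merge K (upd g n (mt y B)) h) (bound_sups K (S o) p) -
                                   eval X (upd g n (mt y B)) p) <= e).
  { intros y. apply Hh. apply (bounded_upd_mt X HL K n b); auto.
    now apply bounded_bounded_except. }
  apply (Rsup_eval_close X _ _ X (fun y => merge K (upd g n (mt y B)) h)
           (fun y => upd g n (mt y B)) e (inhabits zr)), Rabs_le_between in Hclose.
  assert (HS2 : Rsup (fun r => exists y, r = eval X (upd g n (mt y B)) p) <= eval X g (FSup n p))
    by (apply Rsup_eval_le; [exact (inhabits zr) | intros; apply eval_FSup_ge]).
  pose proof (Hcoll g (bounded_bounded_except K n b g Hg)) as Hc.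
  apply Rabs_le. lra.
Qed.

End Approximates.

(** * The Sigma_0 sentence that transfers collection from [M] to [N] *)

Section TransferSentence.

Variables (K n : nat) (p : formula).
Hypothesis Hp : sup_form K (FSup n p).

(* Index [K] holds the collection bound, [K + 1 + j] the bounds of [bound_sups K 1 p], and the
   two indices after them the bounds of the variables other than [n] and of [n]. *)
Definition transfer_index : nat := K + S (fsize p).

Definition transfer_bounds {X : Lstruct} (h : nat -> X) (B c c' : X) : nat -> X :=
  upd (upd (upd h (K + 0) B) transfer_index c) (S transfer_index) c'.

Definition transfer_pairs : list (nat * nat) :=
  (n, S transfer_index) :: map (fun i => (i, transfer_index)) (others K n).

Definition transfer_body : formula :=
  FAdd (bound_sups K 1 p) (FScale (-1) (bound_sups K 0 (FSup n p))).

Definition transfer_sentence : formula := bsups transfer_pairs transfer_body.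

Lemma comp_transfer_bounds {A B : Lstruct} (f : A -> B) (h : nat -> A) b c c' :
  (fun j => f (transfer_bounds h b c c' j)) =
  transfer_bounds (fun j => f (h j)) (f b) (f c) (f c').
Proof. unfold transfer_bounds. now rewrite !comp_upd. Qed.

Lemma transfer_pairs_ok : bsups_ok K transfer_pairs.
Proof.
  intros ik Hik. unfold transfer_pairs, transfer_index in Hik.
  destruct Hik as [<- | Hik]; [destruct Hp; simpl; lia|].
  apply in_map_iff in Hik as [i [<- Hi]]. apply In_others in Hi. simpl. lia.
Qed.

Lemma map_fst_transfer_pairs : map fst transfer_pairs = n :: others K n.
Proof. simpl. f_equal. rewrite map_map. apply map_id. Qed.

Lemma NoDup_transfer_pairs : NoDup (map fst transfer_pairs).
Proof.
  rewrite map_fst_transfer_pairs. constructor; [rewrite In_others; lia | apply NoDup_others].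
Qed.

Lemma transfer_body_bound_in z : bound_in z transfer_body -> (z < K)%nat.
Proof.
  intros [Hz | Hz].
  - apply (bound_sups_bound_in K p 1); auto. apply Hp.
  - apply (bound_sups_bound_in K (FSup n p) 0); auto.
Qed.

Lemma Sigma0_transfer_sentence : Sigma0 transfer_sentence.
Proof.
  apply (Sigma0_bsups K); auto using transfer_pairs_ok, transfer_body_bound_in.
  apply S0_add; [|apply S0_scale]; apply Sigma0_bound_sups; auto. apply Hp.
Qed.

Lemma transfer_variant_above {X : Lstruct} (a a' : nat -> X) j :
  bsups_variant transfer_pairs a a' -> (K <= j)%nat -> a' j = a j.
Proof.
  intros [Hout _] Hj. apply Hout. rewrite map_fst_transfer_pairs.
  intros [E | E]; [destruct Hp; lia|].
  apply In_others in E. lia.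
Qed.

Lemma transfer_variant_bounds {X : Lstruct} (z h a' : nat -> X) B c c' :
  bsups_variant transfer_pairs (merge K z (transfer_bounds h B c c')) a' ->
  bounded_except K n c a' /\ le (a' n) c'.
Proof.
  intros [_ Hin]. unfold transfer_pairs, transfer_bounds, transfer_index in *. split.
  - intros i Hi Hin'. specialize (Hin (i, (K + S (fsize p))%nat)). simpl in Hin.
    rewrite merge_ge in Hin by lia. simpl_upd_in Hin. apply Hin. right.
    apply in_map_iff. exists i. split; auto. now apply In_others.
  - specialize (Hin (n, S (K + S (fsize p))) (or_introl eq_refl)). simpl in Hin.
    rewrite merge_ge in Hin by lia. now simpl_upd_in Hin.
Qed.

Lemma transfer_variant_upd {X : Lstruct} (z h g : nat -> X) B c c' x :
  bounded_except K n c g -> le x c' ->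
  bsups_variant transfer_pairs (merge K z (transfer_bounds h B c c'))
                (merge K (upd g n x) (transfer_bounds h B c c')).
Proof.
  intros Hg Hx. destruct Hp as [Hn _]. split.
  - intros j Hj. rewrite map_fst_transfer_pairs in Hj.
    destruct (Nat.lt_ge_cases j K) as [HjK | HjK]; [|now rewrite !merge_ge].
    exfalso. apply Hj. destruct (Nat.eq_dec j n) as [-> | Hjn]; [now left|].
    right. now apply In_others.
  - unfold transfer_pairs, transfer_bounds, transfer_index. intros ik [<- | Hik].
    + simpl. rewrite merge_lt, upd_eq, merge_ge by lia. now simpl_upd.
    + apply in_map_iff in Hik as [i [<- Hi]]. apply In_others in Hi as [HiK Hin]. simpl.
      rewrite merge_lt, upd_neq, merge_ge by lia. simpl_upd. auto.
Qed.

Lemma transfer_body_eval {X : Lstruct} (a h : nat -> X) B c c' :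
  (forall j, (K <= j)%nat -> a j = transfer_bounds h B c c' j) ->
  eval X a transfer_body =
  eval X (merge K a h) (bound_sups K 1 p) -
  Rsup (fun r => exists y, r = eval X (merge K (upd a n (mt y B)) h) (bound_sups K 1 p)).
Proof.
  intros Ha. destruct Hp as [Hn Hp'].
  assert (Hbody : forall j, (K <= j < K + S (fsize p))%nat ->
                    a j = upd h (K + 0) B j).
  { intros j Hj. rewrite Ha by lia. unfold transfer_bounds, transfer_index.
    rewrite !upd_neq by lia. reflexivity. }
  change (eval X a transfer_body) with
    (eval X a (bound_sups K 1 p) + -1 * eval X a (bound_sups K 0 (FSup n p))).
  assert (E1 : eval X a (bound_sups K 1 p) = eval X (merge K a h) (bound_sups K 1 p)).
  { apply bound_sups_ext; auto.
    - intros j Hj. now rewrite merge_lt.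
    - intros j Hj. rewrite merge_ge, Hbody by lia. apply upd_neq. lia. }
  assert (E2 : eval X a (bound_sups K 0 (FSup n p)) =
               eval X (merge K a (upd h (K + 0) B)) (bound_sups K 0 (FSup n p))).
  { apply bound_sups_ext; [split; auto | |].
    - intros j Hj. now rewrite merge_lt.
    - intros j Hj. simpl in Hj. rewrite merge_ge by lia. apply Hbody. lia. }
  rewrite E1, E2.
  rewrite bound_sups_FSup_merge_eval by (split; auto). lra.
Qed.

End TransferSentence.

(** * Sigma_0-elementary cofinal extensions are elementary *)

Section CofinalExtension.

Variables (M N : Lstruct) (f : embedding M N).
Hypotheses (HLM : lattice_laws M) (HLN : lattice_laws N) (HM : models_AA M)
  (Hs0 : Sigma0_elementary f) (Hcof : cofinal f).

Definition approximable (K : nat) (p : formula) : Prop :=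
  forall o (b : M) e, 0 < e -> exists h : nat -> M,
    approximates K o p b h e /\ approximates K o p (f b) (fun j => f (h j)) e.

Lemma approximable_bound_sups_id K p : sup_form K p -> (forall o, bound_sups K o p = p) -> approximable K p.
Proof.
  intros Hp Hb o b e He. exists (fun _ => zr).
  split; apply (approximates_weaken _ K o p _ _ 0); try lra; auto using approximates_bound_sups_id.
Qed.

Lemma approximable_FAdd K p q :
  sup_form K p -> sup_form K q -> approximable K p -> approximable K q ->
  approximable K (FAdd p q).
Proof.
  intros Hp Hq Ap Aq o b e He.
  destruct (Ap o b (e / 2)) as [h1 [H1M H1N]]; [lra|].
  destruct (Aq (o + fsize p)%nat b (e / 2)) as [h2 [H2M H2N]]; [lra|].
  exists (split_at (K + (o + fsize p)) h1 h2). rewrite comp_split_at.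
  replace e with (e / 2 + e / 2) by field. split; now apply approximates_FAdd.
Qed.

Lemma approximable_FScale K r p : approximable K p -> approximable K (FScale r p).
Proof.
  intros Ap o b e He. pose proof (Rabs_pos r) as Hr.
  destruct (Ap o b (e / (Rabs r + 1))) as [h [HhM HhN]]; [apply Rdiv_lt_0_compat; lra|].
  assert (Hsmall : Rabs r * (e / (Rabs r + 1)) <= e).
  { apply (Rmult_le_reg_r (Rabs r + 1)); [lra|].
    replace (Rabs r * (e / (Rabs r + 1)) * (Rabs r + 1)) with (Rabs r * e) by (field; lra). nra. }
  exists h. split; eapply approximates_weaken; eauto using approximates_FScale.
Qed.

Lemma eval_transfer_sentence_M_le K n p (b b' B : M) h2 e d :
  sup_form K (FSup n p) -> le b B -> collects K n p b B e ->
  approximates K 1 p (jn B b') h2 d ->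
  eval M (merge K (fun _ => zr) (transfer_bounds K p h2 B b b')) (transfer_sentence K n p)
  <= e + 2 * d.
Proof.
  intros Hp HbB Hcoll Hh2.
  apply (bsups_le K (transfer_body K n p) (transfer_body_bound_in K n p Hp) M (mt_le_r M HLM));
    auto using transfer_pairs_ok, NoDup_transfer_pairs.
  intros a' Hva'. destruct (transfer_variant_bounds K n p _ _ _ _ _ _ Hva') as [Hexc Han].
  rewrite (transfer_body_eval K n p Hp a' h2 B b b')
    by (intros j Hj; rewrite (transfer_variant_above K n p Hp _ _ j Hva' Hj); now apply merge_ge).
  assert (HBb2 : le B (jn B b')) by now apply le_jn_l.
  assert (Hexc2 : bounded_except K n (jn B b') a')
    by (apply (bounded_except_weaken M HLM) with b; auto; now apply lat_le_trans with B).
  assert (Ha' : Rabs (eval M (merge K a' h2) (bound_sups K 1 p) - eval M a' p) <= d).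
  { apply Hh2. rewrite <- (upd_id a' n). apply bounded_upd; auto.
    apply lat_le_trans with b'; auto. now apply le_jn_r. }
  assert (Hclose : forall y, Rabs (eval M (merge K (upd a' n (mt y B)) h2) (bound_sups K 1 p) -
                                   eval M (upd a' n (mt y B)) p) <= d).
  { intros y. apply Hh2, bounded_upd; auto. apply lat_le_trans with B; auto. now apply mt_le_r. }
  apply (Rsup_eval_close M _ _ M (fun y => merge K (upd a' n (mt y B)) h2)
           (fun y => upd a' n (mt y B)) d (inhabits zr)), Rabs_le_between in Hclose.
  apply Rabs_le_between in Ha'.
  pose proof (eval_FSup_ge M a' n p (a' n)) as Hsup. rewrite upd_id in Hsup.
  pose proof (Hcoll a' Hexc) as Hc.
  lra.
Qed.

(* The bounds of [x] from cofinality, and of the other variables, enter only as parameters of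
   [transfer_sentence], whose smallness in [M] thus carries over to [N]. *)
Lemma collects_transfer K n p (b B : M) e d :
  sup_form K (FSup n p) -> approximable K p -> le b B -> collects K n p b B e -> 0 < d ->
  collects K n p (f b) (f B) (e + 4 * d).
Proof.
  intros Hp Ap HbB Hcoll Hd g Hg. apply eval_FSup_le. intros x.
  destruct (Hcof x) as [b' Hxb'].
  destruct (Ap 1%nat (jn B b') d Hd) as [h2 [HM2 HN2]].
  pose proof (eval_transfer_sentence_M_le K n p b b' B h2 e d Hp HbB Hcoll HM2) as Hsmall.
  rewrite (Hs0 _ (Sigma0_transfer_sentence K n p Hp)), comp_merge, comp_transfer_bounds in Hsmall.
  set (HN := transfer_bounds K p (fun j => f (h2 j)) (f B) (f b) (f b')) in Hsmall.
  pose proof Hp as [Hn _].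
  set (a' := merge K (upd g n x) HN).
  assert (Hbody : eval N a' (transfer_body K n p) <= e + 2 * d).
  { eapply Rle_trans; [|exact Hsmall].
    apply (bsups_ge K (transfer_body K n p) (transfer_body_bound_in K n p Hp) N);
      auto using transfer_pairs_ok, NoDup_transfer_pairs.
    now apply transfer_variant_upd. }
  rewrite (transfer_body_eval K n p Hp a' (fun j => f (h2 j)) (f B) (f b) (f b'))
    in Hbody by (intros j Hj; unfold a'; now rewrite merge_ge).
  unfold a' in Hbody. rewrite merge_merge in Hbody.
  rewrite (Rsup_image_ext _ (fun y => eval N (merge K (upd g n (mt y (f B))) (fun j => f (h2 j)))
                                        (bound_sups K 1 p))) in Hbody
    by (intros y; now rewrite <- merge_upd, merge_merge, upd_shadow by auto).
  set (c := f (jn B b')).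
  assert (HBc : le (f B) c) by (apply emb_le, le_jn_l; auto).
  assert (Hgc : bounded_except K n c g)
    by (apply (bounded_except_weaken N HLN) with (f b); auto;
        apply (lat_le_trans N HLN) with (f B); auto; now apply emb_le).
  assert (Hx : Rabs (eval N (merge K (upd g n x) (fun j => f (h2 j))) (bound_sups K 1 p) -
                     eval N (upd g n x) p) <= d).
  { apply HN2, bounded_upd; auto. apply (lat_le_trans N HLN) with (f b'); auto.
    apply emb_le, le_jn_r; auto. }
  apply Rabs_le_between in Hx.
  assert (Hclose : forall y, Rabs (eval N (merge K (upd g n (mt y (f B))) (fun j => f (h2 j)))
                                     (bound_sups K 1 p) - eval N (upd g n (mt y (f B))) p) <= d).
  { intros y. apply HN2, bounded_upd; auto.
    apply (lat_le_trans N HLN) with (f B); auto. now apply mt_le_r. }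
  apply (Rsup_eval_close N _ _ N (fun y => merge K (upd g n (mt y (f B))) (fun j => f (h2 j)))
           (fun y => upd g n (mt y (f B))) d (inhabits zr)), Rabs_le_between in Hclose.
  lra.
Qed.

Lemma approximable_FSup K n p :
  sup_form K (FSup n p) -> approximable K p -> approximable K (FSup n p).
Proof.
  intros Hp Ap o b e He. set (d := e / 6).
  destruct (models_AA_collects K n p (proj2 Hp) (proj1 Hp) M b d HM HLM) as [B [HbB HcollM]];
    [unfold d; lra|].
  destruct (Ap (S o) B d) as [h [HhM HhN]]; [unfold d; lra|].
  pose proof (collects_transfer K n p b B d d Hp Ap HbB HcollM ltac:(unfold d; lra)) as HcollN.
  exists (upd h (K + o) B). rewrite comp_upd. split.
  - apply (approximates_weaken _ _ _ _ _ _ (d + d)); [unfold d; lra|].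
    now apply approximates_FSup.
  - apply (approximates_weaken _ _ _ _ _ _ (d + (d + 4 * d))); [unfold d; lra|].
    apply approximates_FSup; auto. now apply emb_le.
Qed.

Lemma approximable_sup_form K p : sup_form K p -> approximable K p.
Proof.
  induction p; intros Hp.
  - now apply approximable_bound_sups_id.
  - now apply approximable_bound_sups_id.
  - destruct Hp. apply approximable_FAdd; auto.
  - apply approximable_FScale; auto.
  - apply approximable_FSup; auto. apply IHp, Hp.
  - destruct Hp.
Qed.

Lemma sup_form_preserved K p : sup_form K p -> forall g, eval M g p = eval N (fun j => f (g j)) p.
Proof.
  intros Hp g. apply Req_of_close. intros e He.
  destruct (approximable_sup_form K p Hp 0%nat (join_below M g K) (e / 2)) as [h [HhM HhN]];
    [lra|].
  pose proof (bounded_join_below M HLM g K) as Hg.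
  specialize (HhM g Hg). specialize (HhN _ (bounded_emb f K _ g Hg)).
  rewrite (Hs0 _ (Sigma0_bound_sups K p 0 Hp)), comp_merge in HhM.
  apply Rabs_le_between in HhM, HhN. apply Rabs_le. lra.
Qed.

End CofinalExtension.

Lemma Sigma0_elementary_elementary M N (f : embedding M N) :
  AA0 M -> AA0 N -> cofinal f -> models_AA M -> Sigma0_elementary f -> elementary f.
Proof.
  intros H0M H0N Hcof HM Hs0 p a.
  rewrite <- (eval_sup_normal M p a), <- (eval_sup_normal N p).
  destruct (sup_form_sup_normal p) as [K HK].
  eapply sup_form_preserved; eauto using AA0_lattice_laws.
Qed.

Theorem mainTheorem14 :
  affine_MRDP ->
  forall (M N : Lstruct) (f : embedding M N),
    AA0 M -> AA0 N -> cofinal f -> models_AA M ->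
    (Sigma0_elementary f <-> models_AA N) /\ (models_AA N <-> elementary f).
Proof.
  intros HMRDP M N f H0M H0N Hcof HM.
  pose proof (Sigma0_elementary_elementary M N f H0M H0N Hcof HM) as i_iii.
  pose proof (fun Hel => elementary_models_AA M N f Hel HM) as iii_ii.
  pose proof (Sigma0_elementary_of_MRDP M N f HMRDP HM) as ii_i.
  tauto.
Qed.
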